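(* Let $\mu>1/2$, $0<\nu<1/2$, $g\in X$, and $f=F-(\mu-\nu)\theta$. Then: (1) there is a constant $c(\mu,\nu)$ depending only on $\mu,\nu$ such that $$|f(x)|\le c(\mu,\nu)e^{4\|g\|_\infty}|x|^{1-2\mu}+(\mu-\nu)|x|^{-1}\quad(|x|\ge1),\qquad |f(x)|\le 2(\mu-\nu)\pi\quad(x\in\mathbb{R}),$$ $$|f'(x)|\le c(\mu,\nu)e^{4\|g\|_\infty}\frac{1}{|x|^{2\nu}(x^2+1)^{\mu-\nu}}+(\mu-\nu)\frac1{x^2+1}\quad(x\ne0);$$ (2) if $\|g\|_\infty\le M$, then there is a constant $c(\mu,\nu,M)$ depending only on $\mu,\nu,M$ such that $$|T[g](x)|\le c(\mu,\nu,M)\big(|x|^{1/2-\mu}+|x|^{-1/2}\big)\quad\text{for }|x|\ge4.$$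
   Context: $X=\{g\in C(\mathbb{R})\cap L^\infty(\mathbb{R})\text{ real}:\ \lim_{x\to\pm\infty}g(x)=0\}$ with sup norm. $\theta:\mathbb{R}\to\mathbb{R}$ is the continuous branch of $\arg(x-i)$ in $(-\pi,0)$: $\theta(x)=\arctan(-1/x)$ for $x>0$, $\theta(0)=-\pi/2$, $\theta(x)=\arctan(-1/x)-\pi$ for $x<0$. For $g\in X$: $h^{-1}(0)=0$, $(h^{-1})'(x)=|x|^{\nu-1}(x^2+1)^{(\mu-\nu)/2}e^{g(x)}$; $\kappa>0$ with $\int_{\mathbb{R}}\frac{\kappa}{x h^{-1}(x)(h^{-1})'(x)}dx=(\mu-\nu)\pi$; $F$ continuous with $F'(x)=\frac{\kappa}{xh^{-1}(x)(h^{-1})'(x)}$ ($x\neq0$) and $F(+\infty)=0$ (so $F(-\infty)=-(\mu-\nu)\pi$); $T[g]=H(F-(\mu-\nu)\theta)$ with $H$ the Hilbert transform $Hf(x)=\frac1\pi\mathrm{p.v.}\int\frac{f(y)}{x-y}dy$. *)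

From Stdlib Require Import Reals Lra.
Open Scope R_scope.

Definition lim_pinf (f : R -> R) (l : R) : Prop :=
  forall eps, 0 < eps -> exists M, forall x, M < x -> Rabs (f x - l) < eps.
Definition lim_minf (f : R -> R) (l : R) : Prop :=
  forall eps, 0 < eps -> exists M, forall x, x < M -> Rabs (f x - l) < eps.

Definition inX (g : R -> R) : Prop :=
  continuity g /\ (exists B, forall x, Rabs (g x) <= B) /\
  lim_pinf g 0 /\ lim_minf g 0.

(* theta : continuous branch of arg(x - i) in (-pi, 0) *)
Definition theta (x : R) : R :=
  if Rlt_dec 0 x then atan (- / x)
  else if Req_EM_T x 0 then - (PI / 2)
  else atan (- / x) - PI.

(* (h^{-1})'(x) = |x|^(nu-1) (x^2+1)^((mu-nu)/2) e^{g(x)}, for x <> 0 *)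
Definition hinvD (mu nu : R) (g : R -> R) (x : R) : R :=
  Rpower (Rabs x) (nu - 1) * Rpower (x ^ 2 + 1) ((mu - nu) / 2) * exp (g x).

Definition setup (mu nu : R) (g hinv : R -> R) (kappa : R) (F : R -> R) : Prop :=
  inX g /\
  continuity hinv /\ hinv 0 = 0 /\
  (forall x, x <> 0 -> derivable_pt_lim hinv x (hinvD mu nu g x)) /\
  0 < kappa /\
  continuity F /\
  (forall x, x <> 0 ->
     derivable_pt_lim F x (kappa / (x * hinv x * hinvD mu nu g x))) /\
  lim_pinf F 0 /\
  lim_minf F (- ((mu - nu) * PI)).

Definition fF (mu nu : R) (F : R -> R) (x : R) : R := F x - (mu - nu) * theta x.

Definition pv_trunc (f : R -> R) (x e Rr v : R) : Prop :=
  exists (pr1 : Riemann_integrable (fun y => f y / (x - y)) (x - Rr) (x - e))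
         (pr2 : Riemann_integrable (fun y => f y / (x - y)) (x + e) (x + Rr)),
    v = RiemannInt pr1 + RiemannInt pr2.

Definition hilbert_at (f : R -> R) (x L : R) : Prop :=
  forall eps, 0 < eps -> exists d M, 0 < d /\
    forall e Rr, 0 < e < d -> M < Rr ->
      exists v, pv_trunc f x e Rr v /\ Rabs (v / PI - L) < eps.

From Stdlib Require Import Reals Lra Lia ZArith.
From Coquelicot Require Import Coquelicot.
Open Scope R_scope.

(* Comparing h^{-1} with explicit functions through "nonnegative
   derivative implies nondecreasing" gives, for |g| <= M,
     x h^{-1}(x) >= e^{-M}/mu |x| G(|x|)   with G(t) = t^nu (t^2+1)^((mu-nu)/2),
     h^{-1}(x) <= e^M 5^((mu-nu)/2) x^nu / nu   on (0,2].
   The first bound makes F' = kappa / (x h^{-1} (h^{-1})') positive and at most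
   kappa mu e^{2M} / Den(x), Den(x) = |x|^{2nu} (x^2+1)^(mu-nu); so F increases
   from -(mu-nu)pi to 0, and the mean value theorem on [1,2] with the second
   bound gives kappa <= c e^{2M}.  Integrating F' <= c e^{4M} |x|^{-2mu} from x
   to +-infinity bounds F at infinity, and theta x = atan x - pi/2 supplies the
   term (mu-nu)/|x|.

   The truncated principal value at x equals the integral over (e,R)
   of D(t) = (f(x-t) - f(x+t))/t.  On (0,1] the derivative bound of part (1)
   bounds D; on [1,oo) the decay |f y| <= C (1+|y|)^(-gamma), gamma =
   min(2mu-1, 1), is integrated over five ranges of t.  Both ends converge by a
   Cauchy argument, and the limit is O(|x|^(-gamma/2)). *)

Lemma nondecreasing_of_deriv (h dh : R -> R) a b : a <= b ->
  (forall t, a <= t <= b -> continuity_pt h t) ->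
  (forall t, a < t < b -> derivable_pt_lim h t (dh t)) ->
  (forall t, a < t < b -> 0 <= dh t) -> h a <= h b.
Proof.
intros Hab Hc Hd Hp.
destruct (Req_dec a b) as [->|Hne]; [lra|].
set (df := fun t => if Rle_dec t a then 0 else if Rle_dec b t then 0 else dh t).
assert (Hdf : forall t, a < t < b -> df t = dh t).
{ intros t Ht. unfold df. destruct (Rle_dec t a); [lra|]. destruct (Rle_dec b t); [lra|]. reflexivity. }
destruct (MVT_gen h a b df) as [c [Hc1 Hc2]];
  rewrite ?Rmin_left, ?Rmax_right in * by lra.
- intros t Ht. rewrite Hdf by lra. apply is_derive_Reals, Hd; lra.
- intros t Ht. apply Hc; lra.
- assert (0 <= df c).
  { unfold df. destruct (Rle_dec c a); [lra|]. destruct (Rle_dec b c); [lra|]. apply Hp; lra. }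
  assert (0 <= df c * (b - a)) by (apply Rmult_le_pos; lra). lra.
Qed.

Lemma continuity_pt_of_deriv h t l : derivable_pt_lim h t l -> continuity_pt h t.
Proof. intros H. apply derivable_continuous_pt. exists l. exact H. Qed.

Lemma nondecreasing_of_deriv_off0 (h dh : R -> R) : continuity h ->
  (forall t, t <> 0 -> derivable_pt_lim h t (dh t)) -> (forall t, t <> 0 -> 0 <= dh t) ->
  forall a b, a <= b -> h a <= h b.
Proof.
intros Hc Hd Hp.
assert (G : forall a b, a <= b -> (0 <= a \/ b <= 0) -> h a <= h b).
{ intros a b H1 H2. apply (nondecreasing_of_deriv h dh); auto.
  - intros t Ht. apply Hd. lra.
  - intros t Ht. apply Hp. lra. }
intros a b Hab.
destruct (Rle_or_lt 0 a); [apply G; lra|].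
destruct (Rle_or_lt b 0); [apply G; lra|].
apply Rle_trans with (h 0); apply G; lra.
Qed.

Lemma le_of_nondecreasing_gap (a b : R -> R) x :
  (forall e, 0 < e < x -> a e - b e <= a x - b x) ->
  (forall e, 0 < e < x -> 0 <= a e) ->
  (forall d, 0 < d -> exists e, 0 < e < x /\ b e < d) -> b x <= a x.
Proof.
intros Hgap Ha Hb. apply Rnot_lt_le. intros Hlt.
destruct (Hb (b x - a x) ltac:(lra)) as [e [He Hbe]].
specialize (Hgap e He). specialize (Ha e He). lra.
Qed.

Lemma exists_nat_ge r : exists N : nat, r <= INR N.
Proof.
destruct (archimed (Rabs r)) as [HN _].
assert (0 <= IZR (up (Rabs r))) by (pose proof (Rabs_pos r); lra).
exists (Z.to_nat (up (Rabs r))). rewrite INR_IZR_INZ, Z2Nat.id.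
- pose proof (Rle_abs r); lra.
- apply le_IZR. lra.
Qed.

Lemma limit_of_cauchy_modulus (phi tau : R -> R) (A : R) :
  (forall a b, A <= a -> a <= b -> Rabs (phi a - phi b) <= tau a) ->
  (forall eps, 0 < eps -> exists B, forall a, B <= a -> tau a < eps) ->
  exists L, forall a, A <= a -> Rabs (phi a - L) <= tau a.
Proof.
intros H1 H2.
set (u := fun n : nat => phi (A + INR n)).
assert (Hu : forall n m, (n <= m)%nat -> Rabs (u n - u m) <= tau (A + INR n)).
{ intros n m Hnm. apply le_INR in Hnm. pose proof (pos_INR n). apply H1; lra. }
assert (Hc : Cauchy_crit u).
{ intros eps Heps. destruct (H2 eps Heps) as [B HB].
  destruct (exists_nat_ge (B - A)) as [N HN].
  exists N. intros n m Hn Hm. unfold R_dist.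
  apply le_INR in Hn. apply le_INR in Hm.
  destruct (Nat.le_ge_cases n m) as [Hnm|Hnm].
  - eapply Rle_lt_trans; [apply Hu, Hnm | apply HB; lra].
  - rewrite Rabs_minus_sym. eapply Rle_lt_trans; [apply Hu, Hnm | apply HB; lra]. }
destruct (Rcomplete.R_complete u Hc) as [L HL].
exists L. intros a Ha. apply le_epsilon. intros d Hd.
destruct (HL d Hd) as [N1 HN1].
destruct (exists_nat_ge (a - A)) as [N2 HN2].
set (n := Nat.max N1 N2).
assert (Hn2 : INR N2 <= INR n) by (apply le_INR; lia).
specialize (HN1 n ltac:(lia)). unfold R_dist, u in HN1.
assert (Rabs (phi a - phi (A + INR n)) <= tau a) by (apply H1; lra).
replace (phi a - L) with ((phi a - phi (A + INR n)) + (phi (A + INR n) - L)) by ring.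
eapply Rle_trans. apply Rabs_triang. lra.
Qed.

Lemma exp_le a b : a <= b -> exp a <= exp b.
Proof. intros [H|H]; [left; apply exp_increasing; auto | subst; lra]. Qed.

Lemma Rpower_pos x y : 0 < Rpower x y.
Proof. apply exp_pos. Qed.

Lemma Rpower_minus_1 t a : 0 < t -> Rpower t (a - 1) = Rpower t a / t.
Proof.
intros Ht. unfold Rpower. replace ((a - 1) * ln t) with (a * ln t + - ln t) by ring.
rewrite exp_plus, exp_Ropp, exp_ln by auto. reflexivity.
Qed.

Lemma Rpower_1_base y : Rpower 1 y = 1.
Proof. unfold Rpower. rewrite ln_1, Rmult_0_r, exp_0. reflexivity. Qed.

Lemma Rpower_neg_antitone a b g : 0 < a <= b -> 0 <= g -> Rpower b (-g) <= Rpower a (-g).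
Proof.
intros. rewrite !Rpower_Ropp. apply Rinv_le_contravar; [apply Rpower_pos | apply Rle_Rpower_l; lra].
Qed.

Lemma Rpower_neg_le_1 a g : 1 <= a -> 0 <= g -> Rpower a (-g) <= 1.
Proof. intros. rewrite <- (Rpower_1_base (-g)). apply Rpower_neg_antitone; lra. Qed.

Lemma Rpower_neg_half a g : 0 < a -> 0 <= g <= 1 -> Rpower (a/2) (-g) <= 2 * Rpower a (-g).
Proof.
intros Ha Hg. unfold Rdiv. rewrite <- Rpower_mult_distr by lra.
rewrite Rmult_comm. apply Rmult_le_compat_r; [apply Rlt_le, Rpower_pos|].
unfold Rpower. rewrite ln_Rinv by lra. replace (- g * - ln 2) with (g * ln 2) by ring.
fold (Rpower 2 g). apply Rle_trans with (Rpower 2 1); [apply Rle_Rpower; lra | rewrite Rpower_1; lra].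
Qed.

Lemma Rpower_sqrt_neg X g : 0 < X -> Rpower (sqrt X) (-g) = Rpower X (-(g/2)).
Proof. intros. rewrite <- Rpower_sqrt by auto. rewrite Rpower_mult. f_equal. field. Qed.

Lemma ln_le_Rpower X g : 0 < X -> 0 < g -> ln X <= 2 / g * Rpower X (g/2).
Proof.
intros HX Hg. pose proof (exp_ineq1_le (ln (Rpower X (g/2)))) as H.
rewrite exp_ln in H by apply Rpower_pos. rewrite ln_Rpower in H.
apply Rmult_le_reg_l with (g/2); [lra|].
replace (g / 2 * (2 / g * Rpower X (g / 2))) with (Rpower X (g/2)) by (field; lra). lra.
Qed.

Lemma Rpower_neg_vanishes Z g : 0 <= Z -> 0 < g ->
  forall eps, 0 < eps -> exists B, forall a, B <= a -> Z * Rpower a (-g) < eps.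
Proof.
intros HZ Hg eps He. set (T := Z / (g * eps)).
assert (HT : 0 <= T) by (apply Rmult_le_pos; [lra | apply Rlt_le, Rinv_0_lt_compat; nra]).
exists (Rmax 1 (exp T)). intros a Ha.
assert (Ha1 : 1 <= a) by (pose proof (Rmax_l 1 (exp T)); lra).
assert (Hla : T <= ln a).
{ rewrite <- (ln_exp T). apply ln_le; [apply exp_pos | pose proof (Rmax_r 1 (exp T)); lra]. }
unfold Rpower. replace (- g * ln a) with (- (g * ln a)) by ring. rewrite exp_Ropp.
pose proof (exp_ineq1_le (g * ln a)).
assert (1 + g * T <= exp (g * ln a)) by (apply Rle_trans with (1 + g * ln a); nra).
apply Rle_lt_trans with (Z / (1 + g * T)).
- unfold Rdiv. apply Rmult_le_compat_l; [lra | apply Rinv_le_contravar; nra].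
- apply Rmult_lt_reg_r with (1 + g * T); [nra|].
  replace (Z / (1 + g * T) * (1 + g * T)) with Z by (field; nra).
  replace (g * T) with (Z / eps) by (unfold T; field; lra).
  replace (eps * (1 + Z / eps)) with (eps + Z) by (field; lra). lra.
Qed.

(* If G -> 0 at +oo and G' <= A t^(-a) on [x0,oo) with a > 1, then
   -G x <= A/(a-1) x^(1-a): integrate G' from x to +oo. *)
Lemma tail_from_deriv_bound (G dG : R -> R) (A a x0 : R) : 1 < a -> 0 < x0 -> 0 <= A ->
  (forall t, x0 <= t -> derivable_pt_lim G t (dG t)) ->
  (forall t, x0 <= t -> dG t <= A * Rpower t (-a)) ->
  lim_pinf G 0 -> forall x, x0 <= x -> - G x <= A / (a - 1) * Rpower x (1 - a).
Proof.
intros Ha Hx0 HA Hd Hb Hlim x Hx.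
set (B := A / (a - 1)).
assert (HB : 0 <= B) by (apply Rmult_le_pos; [lra | apply Rlt_le, Rinv_0_lt_compat; lra]).
assert (Hdec : forall y, x <= y -> G y + B * Rpower y (1 - a) <= G x + B * Rpower x (1 - a)).
{ intros y Hy.
  cut (- (G x + B * Rpower x (1 - a)) <= - (G y + B * Rpower y (1 - a))); [lra|].
  apply (nondecreasing_of_deriv (fun t => - (G t + B * Rpower t (1 - a)))
           (fun t => - (dG t + B * ((1 - a) * Rpower t (1 - a - 1))))); auto.
  - intros t Ht. apply continuity_pt_of_deriv with (- (dG t + B * ((1 - a) * Rpower t (1 - a - 1)))).
    apply derivable_pt_lim_opp, derivable_pt_lim_plus; [apply Hd; lra|].
    apply derivable_pt_lim_scal, derivable_pt_lim_power. lra.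
  - intros t Ht. apply derivable_pt_lim_opp, derivable_pt_lim_plus; [apply Hd; lra|].
    apply derivable_pt_lim_scal, derivable_pt_lim_power. lra.
  - intros t Ht. specialize (Hb t ltac:(lra)).
    replace (B * ((1 - a) * Rpower t (1 - a - 1))) with (- (A * Rpower t (- a)))
      by (replace (1 - a - 1) with (- a) by ring; unfold B; field; lra).
    lra. }
apply Rnot_lt_le. intros Hlt.
destruct (Hlim (- G x - B * Rpower x (1 - a)) ltac:(lra)) as [N HN].
set (y := Rmax x N + 1).
specialize (HN y ltac:(unfold y; pose proof (Rmax_r x N); lra)).
specialize (Hdec y ltac:(unfold y; pose proof (Rmax_l x N); lra)).
pose proof (Rpower_pos y (1 - a)).
assert (0 <= B * Rpower y (1 - a)) by (apply Rmult_le_pos; lra).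
rewrite Rminus_0_r in HN. pose proof (Rle_abs (- G y)) as HH. rewrite Rabs_Ropp in HH. lra.
Qed.

Lemma theta_eq x : theta x = atan x - PI / 2.
Proof.
unfold theta. destruct (Rlt_dec 0 x).
- rewrite atan_opp, atan_inv by lra. lra.
- destruct (Req_EM_T x 0).
  + subst. rewrite atan_0. lra.
  + replace (/ x) with (- / (- x)) by (field; lra).
    rewrite Ropp_involutive, atan_inv by lra. rewrite atan_opp. lra.
Qed.

Lemma atan_le_id z : 0 <= z -> atan z <= z.
Proof.
intros Hz.
cut (0 - atan 0 <= z - atan z); [rewrite atan_0; lra|].
apply (nondecreasing_of_deriv (fun t => t - atan t) (fun t => 1 - / (1 + t^2))); auto.
- intros t _. apply continuity_pt_of_deriv with (1 - / (1 + t^2)).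
  apply derivable_pt_lim_minus; [apply derivable_pt_lim_id | apply derivable_pt_lim_atan].
- intros t _. apply derivable_pt_lim_minus; [apply derivable_pt_lim_id | apply derivable_pt_lim_atan].
- intros t _. assert (1 <= 1 + t^2) by nra.
  assert (/ (1 + t^2) <= 1) by (rewrite <- Rinv_1; apply Rinv_le_contravar; lra). lra.
Qed.

Lemma atan_pos z : 0 < z -> 0 < atan z.
Proof. intros. rewrite <- atan_0. apply atan_increasing. lra. Qed.

Lemma half_pi_minus_atan x : 0 < x -> 0 < PI / 2 - atan x <= / x.
Proof.
intros Hx. replace (PI / 2 - atan x) with (atan (/ x)) by (rewrite atan_inv by lra; ring).
assert (0 < / x) by (apply Rinv_0_lt_compat; lra).
split; [apply atan_pos | apply atan_le_id]; lra.
Qed.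

(** * Two-sided bounds on h^{-1} *)

(* The model for h^{-1}: G(t) = t^nu (t^2+1)^((mu-nu)/2), whose derivative is
   comparable to (h^{-1})'. *)
Definition hinv_model mu nu t := Rpower t nu * Rpower (t^2+1) ((mu-nu)/2).

Definition hinv_model_deriv mu nu t :=
  nu * Rpower t nu / t * Rpower (t^2+1) ((mu-nu)/2)
  + Rpower t nu * ((mu-nu)/2 * Rpower (t^2+1) ((mu-nu)/2) / (t^2+1) * (2*t)).

Lemma hinv_model_has_deriv mu nu t : 0 < t ->
  derivable_pt_lim (hinv_model mu nu) t (hinv_model_deriv mu nu t).
Proof.
intros. apply is_derive_Reals. unfold hinv_model, hinv_model_deriv, Rpower. auto_derive.
- repeat split; nra.
- replace (t*(t*1)+1) with (t^2+1) by ring. field. split; nra.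
Qed.

Lemma hinvD_on_pos t mu nu g : 0 < t ->
  hinvD mu nu g t = Rpower t nu / t * Rpower (t^2+1) ((mu-nu)/2) * exp (g t).
Proof. intros. unfold hinvD. rewrite Rabs_pos_eq, Rpower_minus_1 by lra. reflexivity. Qed.

Lemma hinvD_gt0 t mu nu g : 0 < hinvD mu nu g t.
Proof.
unfold hinvD. pose proof (Rpower_pos (Rabs t) (nu-1)). pose proof (Rpower_pos (t^2+1) ((mu-nu)/2)).
pose proof (exp_pos (g t)). apply Rmult_lt_0_compat; [apply Rmult_lt_0_compat|]; lra.
Qed.

(* G' <= mu t^(nu-1) (t^2+1)^((mu-nu)/2), hence e^{-M}/mu G' <= (h^{-1})'. *)
Lemma hinv_model_deriv_le mu nu M g t : 0 < nu -> nu < mu ->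
  (forall y, Rabs (g y) <= M) -> 0 < t ->
  exp (-M) / mu * hinv_model_deriv mu nu t <= hinvD mu nu g t.
Proof.
intros Hnu Hmu Hg Ht. rewrite hinvD_on_pos by lra. unfold hinv_model_deriv.
set (p := (mu-nu)/2). set (a := Rpower t nu). set (b := Rpower (t^2+1) p).
assert (0 < a) by apply Rpower_pos. assert (0 < b) by apply Rpower_pos.
assert (Hab : 0 < a / t * b) by (apply Rmult_lt_0_compat; [apply Rdiv_lt_0_compat|]; lra).
assert (HeM : exp (-M) <= exp (g t)) by (apply exp_le; destruct (proj1 (Rabs_le_between _ _) (Hg t)); lra).
assert (Hfrac : t^2 / (t^2+1) <= 1) by (apply Rle_div_l; nra).
assert (E : nu * a / t * b + a * (p * b / (t^2 + 1) * (2 * t)) =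
            (a / t * b) * (nu + (mu-nu) * (t^2 / (t^2+1)))) by (unfold p; field; nra).
rewrite E.
assert (Hmul : nu + (mu-nu) * (t^2 / (t^2+1)) <= mu) by nra.
apply Rle_trans with (exp (-M) * (a / t * b)).
- replace (exp (-M) * (a / t * b)) with (exp (-M) / mu * (a / t * b * mu)) by (field; lra).
  apply Rmult_le_compat_l; [apply Rlt_le, Rdiv_lt_0_compat; [apply exp_pos | lra]|].
  apply Rmult_le_compat_l; lra.
- rewrite Rmult_comm. apply Rmult_le_compat_l; lra.
Qed.

Lemma hinv_model_small mu nu x d : 0 < nu -> nu < mu -> 0 < x -> 0 < d ->
  exists e, 0 < e < x /\ hinv_model mu nu e < d.
Proof.
intros Hnu Hmu Hx Hd.
set (p := (mu-nu)/2).
assert (H2p : 0 < Rpower 2 p) by apply Rpower_pos.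
set (q := Rmin 1 (d / (2 * Rpower 2 p))).
assert (Hq : 0 < q) by (apply Rmin_glb_lt; [lra | apply Rdiv_lt_0_compat; lra]).
assert (Hq1 : q <= 1) by apply Rmin_l.
set (e := Rmin (x/2) (Rpower q (/nu))).
assert (He0 : 0 < e) by (apply Rmin_glb_lt; [lra | apply Rpower_pos]).
assert (Hex : e < x) by (eapply Rle_lt_trans; [apply Rmin_l | lra]).
assert (He1 : e <= 1).
{ eapply Rle_trans; [apply Rmin_r|]. unfold Rpower. rewrite <- exp_0. apply exp_le.
  assert (ln q <= 0) by (rewrite <- ln_1; apply ln_le; lra).
  assert (0 < / nu) by (apply Rinv_0_lt_compat; lra). nra. }
assert (Hen : Rpower e nu <= q).
{ apply Rle_trans with (Rpower (Rpower q (/nu)) nu).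
  - apply Rle_Rpower_l; [lra | split; [lra | apply Rmin_r]].
  - rewrite Rpower_mult. replace (/nu * nu) with 1 by (field; lra). rewrite Rpower_1 by lra. lra. }
assert (Hep : Rpower (e^2+1) p <= Rpower 2 p) by (apply Rle_Rpower_l; [unfold p; lra | nra]).
exists e. split; [lra|]. unfold hinv_model. fold p.
apply Rle_lt_trans with (q * Rpower 2 p).
- apply Rmult_le_compat; try apply Rlt_le, Rpower_pos; lra.
- apply Rle_lt_trans with (d / (2 * Rpower 2 p) * Rpower 2 p).
  + apply Rmult_le_compat_r; [lra | apply Rmin_r].
  + replace (d / (2 * Rpower 2 p) * Rpower 2 p) with (d / 2) by (field; lra). lra.
Qed.

Section HinvOnPositives.
(* h stands for h^{-1} restricted to [0, oo): continuous at 0, h 0 = 0, with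
   derivative hinvD on (0, oo). *)
Variables (mu nu M : R) (g h : R -> R).
Hypotheses (Hnu : 0 < nu) (Hmu : nu < mu) (Hg : forall y, Rabs (g y) <= M)
  (Hc : continuity_pt h 0) (H0 : h 0 = 0)
  (Hd : forall t, 0 < t -> derivable_pt_lim h t (hinvD mu nu g t)).

Lemma hinv_nonneg x : 0 <= x -> 0 <= h x.
Proof.
intros Hx. rewrite <- H0.
apply (nondecreasing_of_deriv h (hinvD mu nu g)); auto.
- intros t Ht. destruct (Req_dec t 0) as [->|]; auto.
  apply (continuity_pt_of_deriv _ _ _ (Hd t ltac:(lra))).
- intros t Ht. apply Hd; lra.
- intros. left. apply hinvD_gt0.
Qed.

Lemma hinv_lower_pos x : 0 < x -> exp (-M) / mu * hinv_model mu nu x <= h x.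
Proof.
intros Hx. set (k := exp (-M) / mu).
assert (Hk : 0 < k) by (apply Rdiv_lt_0_compat; [apply exp_pos | lra]).
apply (le_of_nondecreasing_gap h (fun t => k * hinv_model mu nu t)).
- intros e He.
  apply (nondecreasing_of_deriv (fun t => h t - k * hinv_model mu nu t)
    (fun t => hinvD mu nu g t - k * hinv_model_deriv mu nu t)); [lra | | |].
  + intros t Ht. apply continuity_pt_minus.
    * apply (continuity_pt_of_deriv _ _ _ (Hd t ltac:(lra))).
    * apply continuity_pt_scal, (continuity_pt_of_deriv _ _ _ (hinv_model_has_deriv mu nu t ltac:(lra))).
  + intros t Ht. apply derivable_pt_lim_minus; [apply Hd; lra|].
    apply derivable_pt_lim_scal, hinv_model_has_deriv; lra.
  + intros t Ht. pose proof (hinv_model_deriv_le mu nu M g t Hnu Hmu Hg ltac:(lra)). unfold k. lra.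
- intros e He. apply hinv_nonneg. lra.
- intros d Hdd. destruct (hinv_model_small mu nu x (d / k) Hnu Hmu Hx) as [e [He Hlt]].
  { apply Rdiv_lt_0_compat; lra. }
  exists e. split; auto.
  apply Rmult_lt_compat_l with (r := k) in Hlt; auto.
  replace (k * (d / k)) with d in Hlt by (field; lra). exact Hlt.
Qed.

Lemma hinvD_le_power t : 0 < t <= 2 ->
  hinvD mu nu g t <= exp M * Rpower 5 ((mu-nu)/2) * (Rpower t nu / t).
Proof.
intros Ht. rewrite hinvD_on_pos by lra.
set (p := (mu-nu)/2). set (a := Rpower t nu / t). set (b := Rpower (t^2+1) p).
assert (0 < a) by (apply Rdiv_lt_0_compat; [apply Rpower_pos | lra]).
assert (0 < b) by apply Rpower_pos.
assert (exp (g t) <= exp M) by (apply exp_le; destruct (proj1 (Rabs_le_between _ _) (Hg t)); lra).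
assert (b <= Rpower 5 p) by (apply Rle_Rpower_l; [unfold p; lra | nra]).
assert (b * exp (g t) <= Rpower 5 p * exp M) by (pose proof (exp_pos (g t)); apply Rmult_le_compat; lra).
replace (exp M * Rpower 5 p * a) with (a * (Rpower 5 p * exp M)) by ring.
rewrite Rmult_assoc. apply Rmult_le_compat_l; lra.
Qed.

Lemma hinv_upper_pos x : 0 < x <= 2 -> h x <= exp M * Rpower 5 ((mu-nu)/2) * Rpower x nu / nu.
Proof.
intros Hx. set (k := exp M * Rpower 5 ((mu-nu)/2)).
assert (Hk : 0 < k) by (apply Rmult_lt_0_compat; [apply exp_pos | apply Rpower_pos]).
assert (Hpow : forall t, 0 < t ->
          derivable_pt_lim (fun t => k * Rpower t nu / nu) t (k * (Rpower t nu / t))).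
{ intros t Ht. apply is_derive_Reals. unfold Rpower. auto_derive; [lra | field; lra]. }
apply (le_of_nondecreasing_gap (fun t => k * Rpower t nu / nu) h).
- intros e He.
  apply (nondecreasing_of_deriv (fun t => k * Rpower t nu / nu - h t)
    (fun t => k * (Rpower t nu / t) - hinvD mu nu g t)); [lra | | |].
  + intros t Ht. apply continuity_pt_minus.
    * apply (continuity_pt_of_deriv _ _ _ (Hpow t ltac:(lra))).
    * apply (continuity_pt_of_deriv _ _ _ (Hd t ltac:(lra))).
  + intros t Ht. apply derivable_pt_lim_minus; [apply Hpow | apply Hd]; lra.
  + intros t Ht. pose proof (hinvD_le_power t ltac:(lra)). fold k in H. lra.
- intros e He. pose proof (Rpower_pos e nu).
  apply Rmult_le_pos; [apply Rmult_le_pos; lra | apply Rlt_le, Rinv_0_lt_compat; lra].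
- intros d Hdd. destruct (Hc d Hdd) as [al [Hal Hal2]].
  set (e := Rmin (x/2) (al/2)).
  assert (He0 : 0 < e) by (apply Rmin_glb_lt; lra).
  assert (Hex : e < x) by (eapply Rle_lt_trans; [apply Rmin_l | lra]).
  assert (Hea : e < al) by (eapply Rle_lt_trans; [apply Rmin_r | lra]).
  exists e. split; [lra|].
  specialize (Hal2 e). simpl in Hal2. unfold R_dist in Hal2. rewrite H0, !Rminus_0_r in Hal2.
  pose proof (Rle_abs (h e)).
  enough (Rabs (h e) < d) by lra.
  apply Hal2. split; [split; [exact I | lra] | rewrite Rabs_pos_eq; lra].
Qed.

End HinvOnPositives.

(* Reflection x |-> -x maps the setup for g to the setup for g(-.), which lets
   us transfer the bounds on (0,oo) to (-oo,0). *)
Lemma hinv_reflect_deriv mu nu g hinv t :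
  derivable_pt_lim hinv (-t) (hinvD mu nu g (-t)) ->
  derivable_pt_lim (fun t => - hinv (-t)) t (hinvD mu nu (fun y => g (-y)) t).
Proof.
intros Hd.
replace (hinvD mu nu (fun y => g (-y)) t) with (- (hinvD mu nu g (-t) * -1)).
- apply derivable_pt_lim_opp.
  apply (derivable_pt_lim_comp (fun t => -t) hinv); [|exact Hd].
  apply derivable_pt_lim_opp, derivable_pt_lim_id.
- unfold hinvD. rewrite Rabs_Ropp. replace ((-t)^2) with (t^2) by ring. ring.
Qed.

(** * The function F *)

Definition Den mu nu x := Rpower (Rabs x) (2 * nu) * Rpower (x^2+1) (mu - nu).

Lemma Den_pos mu nu x : 0 < Den mu nu x.
Proof. apply Rmult_lt_0_compat; apply Rpower_pos. Qed.

Lemma Den_ge mu nu x : nu <= mu -> 1 <= Rabs x -> Rpower (Rabs x) (2 * mu) <= Den mu nu x.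
Proof.
intros H1 H2. unfold Den.
assert (E : x^2 = Rpower (Rabs x) 2).
{ rewrite <- pow2_abs. replace 2 with (INR 2) by (simpl; ring). rewrite Rpower_pow by lra. reflexivity. }
apply Rle_trans with (Rpower (Rabs x) (2*nu) * Rpower (x^2) (mu-nu)).
- rewrite E, Rpower_mult, <- Rpower_plus. right. f_equal. ring.
- apply Rmult_le_compat_l; [apply Rlt_le, Rpower_pos|].
  apply Rle_Rpower_l; [lra | split; [rewrite <- pow2_abs; nra | lra]].
Qed.

Definition kappa_const mu nu :=
  (mu - nu) * PI * 2 * (Rpower 5 ((mu-nu)/2) * Rpower 2 nu / nu) * Rpower 5 ((mu-nu)/2).

Lemma kappa_const_pos mu nu : 0 < nu -> nu < mu -> 0 < kappa_const mu nu.
Proof.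
intros. unfold kappa_const. pose proof PI_RGT_0.
pose proof (Rpower_pos 5 ((mu-nu)/2)). pose proof (Rpower_pos 2 nu).
assert (0 < Rpower 5 ((mu - nu) / 2) * Rpower 2 nu / nu)
  by (apply Rdiv_lt_0_compat; [apply Rmult_lt_0_compat|]; lra).
assert (0 < (mu - nu) * PI) by (apply Rmult_lt_0_compat; lra).
apply Rmult_lt_0_compat; [apply Rmult_lt_0_compat|]; lra.
Qed.

Definition Fprime_const mu nu M := kappa_const mu nu * mu * exp (4 * M).

Lemma Fprime_const_pos mu nu M : 0 < nu -> nu < mu -> 0 < Fprime_const mu nu M.
Proof.
intros. pose proof (kappa_const_pos mu nu H H0). pose proof (exp_pos (4*M)).
unfold Fprime_const. apply Rmult_lt_0_compat; [apply Rmult_lt_0_compat|]; lra.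
Qed.

Definition part1_const mu nu := kappa_const mu nu * mu * (1 + 1 / (2 * mu - 1)).

Lemma Fprime_const_le_part1 mu nu M : 1/2 < mu -> 0 < nu -> nu < mu ->
  Fprime_const mu nu M / (2 * mu - 1) <= part1_const mu nu * exp (4 * M) /\
  Fprime_const mu nu M <= part1_const mu nu * exp (4 * M).
Proof.
intros. pose proof (Fprime_const_pos mu nu M H0 H1) as HK.
assert (E : part1_const mu nu * exp (4 * M)
            = Fprime_const mu nu M + Fprime_const mu nu M / (2 * mu - 1))
  by (unfold part1_const, Fprime_const; field; lra).
assert (0 < Fprime_const mu nu M / (2 * mu - 1)) by (apply Rdiv_lt_0_compat; lra).
rewrite E. lra.
Qed.

Lemma fF_eq mu nu F x : fF mu nu F x = F x + (mu - nu) * (PI / 2 - atan x).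
Proof. unfold fF. rewrite theta_eq. ring. Qed.

Section UnderSetup.
Variables (mu nu M : R) (g hinv F : R -> R) (kappa : R).
Hypotheses (Hnu : 0 < nu) (Hnumu : nu < mu)
  (Hs : setup mu nu g hinv kappa F) (Hg : forall y, Rabs (g y) <= M).

Definition Fprime x := kappa / (x * hinv x * hinvD mu nu g x).

Lemma kappa_pos : 0 < kappa.
Proof. destruct Hs as (_&_&_&_&Hk&_). exact Hk. Qed.

Lemma F_cont : continuity F.
Proof. destruct Hs as (_&_&_&_&_&HF&_). exact HF. Qed.

Lemma F_deriv x : x <> 0 -> derivable_pt_lim F x (Fprime x).
Proof. destruct Hs as (_&_&_&_&_&_&HF&_). exact (HF x). Qed.

Lemma hinv_lower x : x <> 0 -> exp (-M) / mu * (Rabs x * hinv_model mu nu (Rabs x)) <= x * hinv x.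
Proof.
intros Hx. destruct Hs as (_ & Hc & H0 & Hd & _).
destruct (Rlt_or_le 0 x) as [Hp|Hn].
- rewrite Rabs_pos_eq by lra.
  pose proof (hinv_lower_pos mu nu M g hinv Hnu Hnumu Hg (Hc 0) H0 (fun t _ => Hd t ltac:(lra)) x Hp).
  replace (exp (-M) / mu * (x * hinv_model mu nu x)) with (x * (exp (-M) / mu * hinv_model mu nu x)) by ring.
  apply Rmult_le_compat_l; lra.
- rewrite Rabs_left by lra.
  assert (Hc' : continuity_pt (fun t => - hinv (-t)) 0).
  { apply continuity_pt_opp, (continuity_pt_comp (fun t => -t) hinv).
    - apply continuity_pt_opp, continuity_pt_id.
    - rewrite Ropp_0. apply Hc. }
  pose proof (hinv_lower_pos mu nu M (fun y => g (-y)) (fun t => - hinv (-t)) Hnu Hnumu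
    (fun y => Hg (-y)) Hc' ltac:(cbv beta; rewrite Ropp_0, H0; ring)
    (fun t Ht => hinv_reflect_deriv mu nu g hinv t (Hd (-t) ltac:(lra))) (-x) ltac:(lra)) as H.
  simpl in H. rewrite Ropp_involutive in H.
  replace (exp (-M) / mu * (- x * hinv_model mu nu (- x))) with (- x * (exp (-M) / mu * hinv_model mu nu (- x))) by ring.
  replace (x * hinv x) with ((-x) * (- hinv x)) by ring.
  apply Rmult_le_compat_l; lra.
Qed.

Lemma Fprime_denominator_lower x : x <> 0 ->
  exp (- (2 * M)) / mu * Den mu nu x <= x * hinv x * hinvD mu nu g x.
Proof.
intros Hx. pose proof (hinv_lower x Hx) as HA.
set (s := Rabs x) in *. assert (Hs0 : 0 < s) by (apply Rabs_pos_lt; auto).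
set (p := (mu - nu) / 2). set (a := Rpower s nu). set (b := Rpower (x^2+1) p).
assert (Ha : 0 < a) by apply Rpower_pos. assert (Hb : 0 < b) by apply Rpower_pos.
assert (HG : hinv_model mu nu s = a * b) by (unfold hinv_model, b, s; rewrite pow2_abs; reflexivity).
assert (HD : hinvD mu nu g x = a / s * b * exp (g x)) by (unfold hinvD; fold s; rewrite Rpower_minus_1 by lra; reflexivity).
assert (HeM : exp (-M) <= exp (g x)) by (apply exp_le; destruct (proj1 (Rabs_le_between _ _) (Hg x)); lra).
assert (HDen : exp (- (2 * M)) / mu * Den mu nu x
               = (exp (-M) / mu * (s * (a * b))) * (a / s * b * exp (-M))).
{ unfold Den. fold s. replace (2 * nu) with (nu + nu) by ring.
  replace (mu - nu) with (p + p) by (unfold p; field). rewrite !Rpower_plus. fold a b.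
  replace (- (2 * M)) with (-M + -M) by ring. rewrite exp_plus. field. split; lra. }
rewrite HDen, HD. rewrite HG in HA. pose proof (exp_pos (-M)).
assert (P1 : 0 < exp (-M) / mu * (s * (a * b))).
{ apply Rmult_lt_0_compat; [apply Rdiv_lt_0_compat | apply Rmult_lt_0_compat; [|apply Rmult_lt_0_compat]]; lra. }
assert (P2 : 0 < a / s * b) by (apply Rmult_lt_0_compat; [apply Rdiv_lt_0_compat|]; lra).
apply Rmult_le_compat; [lra | apply Rlt_le, Rmult_lt_0_compat; lra | lra | apply Rmult_le_compat_l; lra].
Qed.

Lemma Fprime_bound x : x <> 0 ->
  0 < Fprime x /\ Fprime x <= kappa * mu * exp (2 * M) / Den mu nu x.
Proof.
intros Hx. pose proof (Fprime_denominator_lower x Hx) as HQ.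
pose proof kappa_pos. pose proof (Den_pos mu nu x). pose proof (exp_pos (- (2 * M))).
assert (HQ0 : 0 < exp (- (2 * M)) / mu * Den mu nu x)
  by (apply Rmult_lt_0_compat; [apply Rdiv_lt_0_compat|]; lra).
unfold Fprime. split; [apply Rdiv_lt_0_compat; lra|].
apply Rle_trans with (kappa / (exp (- (2 * M)) / mu * Den mu nu x)).
- apply Rmult_le_compat_l; [lra | apply Rinv_le_contravar; lra].
- right. rewrite exp_Ropp. pose proof (exp_pos (2 * M)). field. repeat split; lra.
Qed.

Lemma F_nondecreasing a b : a <= b -> F a <= F b.
Proof.
apply (nondecreasing_of_deriv_off0 F Fprime F_cont F_deriv).
intros t Ht. left. apply (Fprime_bound t Ht).
Qed.

Lemma F_range x : - ((mu - nu) * PI) <= F x <= 0.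
Proof.
destruct Hs as (_&_&_&_&_&_&_&Hp&Hn). split.
- apply Rnot_lt_le. intros Hlt.
  destruct (Hn (- ((mu - nu) * PI) - F x) ltac:(lra)) as [B HB].
  set (y := Rmin x B - 1). specialize (HB y ltac:(unfold y; pose proof (Rmin_r x B); lra)).
  assert (F y <= F x) by (apply F_nondecreasing; unfold y; pose proof (Rmin_l x B); lra).
  pose proof (Rle_abs (- (F y - - ((mu - nu) * PI)))) as HH. rewrite Rabs_Ropp in HH. lra.
- apply Rnot_lt_le. intros Hlt.
  destruct (Hp (F x) ltac:(lra)) as [B HB].
  set (y := Rmax x B + 1). specialize (HB y ltac:(unfold y; pose proof (Rmax_r x B); lra)).
  assert (F x <= F y) by (apply F_nondecreasing; unfold y; pose proof (Rmax_l x B); lra).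
  pose proof (Rle_abs (F y - 0)). lra.
Qed.

Hypothesis Hnu1 : nu < 1.

(* On [1,2]: 0 < c h^{-1}(c) (h^{-1})'(c) <= 2 U V, from the upper bound on
   h^{-1} at 2 and the bound on (h^{-1})' on (0,2]. *)
Lemma hinv_product_on_12 c : 1 <= c <= 2 ->
  0 < c * hinv c * hinvD mu nu g c <=
  2 * (exp M * Rpower 5 ((mu-nu)/2) * Rpower 2 nu / nu) * (exp M * Rpower 5 ((mu-nu)/2)).
Proof.
intros Hc12. pose proof Hs as (_ & Hc & H0 & Hd & _).
set (V := exp M * Rpower 5 ((mu-nu)/2)). set (U := V * Rpower 2 nu / nu).
assert (HV0 : 0 < V) by (apply Rmult_lt_0_compat; [apply exp_pos | apply Rpower_pos]).
assert (HU2 : hinv 2 <= U)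
  by (apply (hinv_upper_pos mu nu M g hinv Hnu Hnumu Hg (Hc 0) H0); [intros; apply Hd | ]; lra).
assert (Hc2 : hinv c <= hinv 2).
{ apply (nondecreasing_of_deriv hinv (hinvD mu nu g)); [lra | intros; apply Hc | intros; apply Hd; lra |].
  intros; left; apply hinvD_gt0. }
assert (Hcpos : 0 < c * hinv c).
{ eapply Rlt_le_trans; [|apply hinv_lower; lra].
  rewrite Rabs_pos_eq by lra. unfold hinv_model.
  pose proof (exp_pos (-M)). pose proof (Rpower_pos c nu). pose proof (Rpower_pos (c^2+1) ((mu-nu)/2)).
  apply Rmult_lt_0_compat; [apply Rdiv_lt_0_compat; lra|].
  apply Rmult_lt_0_compat; [lra | apply Rmult_lt_0_compat; lra]. }
assert (HDV : hinvD mu nu g c <= V).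
{ eapply Rle_trans; [apply (hinvD_le_power mu nu M g); auto; lra|].
  rewrite <- Rpower_minus_1 by lra. fold V.
  assert (Rpower c (nu - 1) <= 1) by (apply Rle_trans with (Rpower c 0); [apply Rle_Rpower | rewrite Rpower_O]; lra).
  replace V with (V * 1) at 2 by ring. apply Rmult_le_compat_l; lra. }
pose proof (hinvD_gt0 c mu nu g).
split; [apply Rmult_lt_0_compat; lra|].
replace (exp M * Rpower 5 ((mu - nu) / 2) * Rpower 2 nu / nu) with U by reflexivity.
fold V. apply Rmult_le_compat; nra.
Qed.

(* The normalisation of F forces kappa <= c(mu,nu) e^{2M}: by the mean value
   theorem F' takes a value <= (mu-nu) pi somewhere in [1,2]. *)
Lemma kappa_bound : kappa <= kappa_const mu nu * exp (2 * M).
Proof.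
destruct (MVT_gen F 1 2 Fprime) as [c [Hc1 Hc2]]; rewrite ?Rmin_left, ?Rmax_right in * by lra.
- intros t Ht. apply is_derive_Reals, F_deriv. lra.
- intros t _. apply F_cont.
- destruct (hinv_product_on_12 c Hc1) as [Hp Hle].
  set (P := 2 * (exp M * Rpower 5 ((mu-nu)/2) * Rpower 2 nu / nu) * (exp M * Rpower 5 ((mu-nu)/2))) in Hle.
  pose proof kappa_pos.
  assert (HF : kappa / P <= Fprime c).
  { unfold Fprime. apply Rmult_le_compat_l; [lra | apply Rinv_le_contravar; lra]. }
  pose proof (F_range 1). pose proof (F_range 2).
  assert (kappa / P <= (mu - nu) * PI) by lra.
  assert (kappa <= (mu - nu) * PI * P).
  { replace kappa with (kappa / P * P) by (field; lra). apply Rmult_le_compat_r; lra. }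
  unfold kappa_const. replace (2 * M) with (M + M) by ring. rewrite exp_plus.
  unfold P in *. lra.
Qed.

Lemma Fprime_bound_exp x : x <> 0 ->
  0 < Fprime x /\ Fprime x <= Fprime_const mu nu M / Den mu nu x.
Proof.
intros Hx. destruct (Fprime_bound x Hx) as [H1 H2]. split; [exact H1|].
eapply Rle_trans; [exact H2|].
pose proof (Den_pos mu nu x). pose proof kappa_bound. pose proof (exp_pos (2 * M)).
unfold Fprime_const. replace (4 * M) with (2 * M + 2 * M) by ring. rewrite exp_plus.
unfold Rdiv. apply Rmult_le_compat_r; [apply Rlt_le, Rinv_0_lt_compat; auto|].
replace (kappa_const mu nu * mu * (exp (2 * M) * exp (2 * M)))
  with ((kappa_const mu nu * exp (2 * M)) * (mu * exp (2 * M))) by ring.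
rewrite (Rmult_assoc kappa). apply Rmult_le_compat_r; [apply Rlt_le, Rmult_lt_0_compat|]; lra.
Qed.

Lemma Fprime_bound_far x : 1 <= Rabs x -> Fprime x <= Fprime_const mu nu M * Rpower (Rabs x) (- (2 * mu)).
Proof.
intros Hx. assert (Hx0 : x <> 0) by (intro; subst; rewrite Rabs_R0 in Hx; lra).
destruct (Fprime_bound_exp x Hx0) as [_ H2].
eapply Rle_trans; [exact H2|]. rewrite Rpower_Ropp.
pose proof (Fprime_const_pos mu nu M Hnu Hnumu).
apply Rmult_le_compat_l; [lra|]. apply Rinv_le_contravar; [apply Rpower_pos | apply Den_ge; lra].
Qed.

Hypothesis Hmu : 1/2 < mu.

Lemma F_tail_pos x : 1 <= x -> - F x <= Fprime_const mu nu M / (2 * mu - 1) * Rpower x (1 - 2 * mu).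
Proof.
pose proof (Fprime_const_pos mu nu M Hnu Hnumu).
apply (tail_from_deriv_bound F Fprime); try lra.
- intros t Ht. apply F_deriv. lra.
- intros t Ht. pose proof (Fprime_bound_far t) as HB. rewrite Rabs_pos_eq in HB by lra. apply HB; lra.
- destruct Hs as (_&_&_&_&_&_&_&Hp&_). exact Hp.
Qed.

Lemma F_tail_neg x : x <= -1 ->
  F x + (mu - nu) * PI <= Fprime_const mu nu M / (2 * mu - 1) * Rpower (- x) (1 - 2 * mu).
Proof.
intros Hx. pose proof (Fprime_const_pos mu nu M Hnu Hnumu).
enough (Hgoal : - (- (F (- - x) + (mu - nu) * PI))
                <= Fprime_const mu nu M / (2 * mu - 1) * Rpower (- x) (1 - 2 * mu))
  by (rewrite !Ropp_involutive in Hgoal; lra).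
apply (tail_from_deriv_bound (fun t => - (F (-t) + (mu - nu) * PI)) (fun t => Fprime (-t)) _ _ 1); try lra.
- intros t Ht. replace (Fprime (-t)) with (- (Fprime (-t) * -1 + 0)) by ring.
  apply derivable_pt_lim_opp, derivable_pt_lim_plus; [|apply derivable_pt_lim_const].
  apply (derivable_pt_lim_comp (fun t => -t) F); [apply derivable_pt_lim_opp, derivable_pt_lim_id|].
  apply F_deriv. lra.
- intros t Ht. pose proof (Fprime_bound_far (-t)) as HB. rewrite Rabs_left in HB by lra.
  rewrite Ropp_involutive in HB. apply HB; lra.
- destruct Hs as (_&_&_&_&_&_&_&_&Hn). intros eps Heps. destruct (Hn eps Heps) as [N HN].
  exists (- N). intros t Ht. specialize (HN (-t) ltac:(lra)).
  replace (- (F (- t) + (mu - nu) * PI) - 0) with (- (F (- t) - - ((mu - nu) * PI))) by ring.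
  rewrite Rabs_Ropp. exact HN.
Qed.

(** * Part (1): bounds on f = F - (mu - nu) theta *)

Lemma f_bound_far x : 1 <= Rabs x ->
  Rabs (fF mu nu F x) <= part1_const mu nu * exp (4 * M) * Rpower (Rabs x) (1 - 2 * mu) + (mu - nu) / Rabs x.
Proof.
intros Hx. rewrite fF_eq.
destruct (Fprime_const_le_part1 mu nu M Hmu Hnu Hnumu) as [HA _].
pose proof (F_range x) as Hr.
destruct (Rle_or_lt 0 x) as [Hp|Hn].
- assert (Ex : Rabs x = x) by (apply Rabs_pos_eq; lra). rewrite Ex in *.
  pose proof (F_tail_pos x Hx). pose proof (half_pi_minus_atan x ltac:(lra)).
  assert (Fprime_const mu nu M / (2 * mu - 1) * Rpower x (1 - 2 * mu) <= part1_const mu nu * exp (4 * M) * Rpower x (1 - 2 * mu))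
    by (apply Rmult_le_compat_r; [apply Rlt_le, Rpower_pos | lra]).
  assert (0 < (mu - nu) * (PI / 2 - atan x) <= (mu - nu) / x)
    by (split; [apply Rmult_lt_0_compat | apply Rmult_le_compat_l]; lra).
  apply Rabs_le. lra.
- assert (Ex : Rabs x = - x) by (apply Rabs_left; lra). rewrite Ex in *.
  pose proof (F_tail_neg x ltac:(lra)). pose proof (half_pi_minus_atan (-x) ltac:(lra)).
  rewrite atan_opp in *.
  assert (Fprime_const mu nu M / (2 * mu - 1) * Rpower (-x) (1 - 2 * mu) <= part1_const mu nu * exp (4 * M) * Rpower (-x) (1 - 2 * mu))
    by (apply Rmult_le_compat_r; [apply Rlt_le, Rpower_pos | lra]).
  assert (0 < (mu - nu) * (PI / 2 - - atan x) <= (mu - nu) / - x)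
    by (split; [apply Rmult_lt_0_compat | apply Rmult_le_compat_l]; lra).
  apply Rabs_le. nra.
Qed.

Lemma f_bound x : Rabs (fF mu nu F x) <= 2 * (mu - nu) * PI.
Proof.
rewrite fF_eq. pose proof (F_range x). pose proof (atan_bound x).
assert (0 <= (mu - nu) * (PI / 2 - atan x) <= (mu - nu) * PI)
  by (split; [apply Rmult_le_pos | apply Rmult_le_compat_l]; lra).
apply Rabs_le. lra.
Qed.

Lemma f_cont : continuity (fF mu nu F).
Proof.
intros z. apply (continuity_pt_ext (fun t => F t + (mu - nu) * (PI / 2 - atan t)));
  [intros; rewrite fF_eq; reflexivity|].
apply continuity_pt_plus; [apply F_cont | apply continuity_pt_scal, continuity_pt_minus].
- apply continuity_pt_const. intros ? ?; reflexivity.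
- apply (continuity_pt_of_deriv _ _ _ (derivable_pt_lim_atan z)).
Qed.

Lemma f_has_deriv x : x <> 0 -> derivable_pt_lim (fF mu nu F) x (Fprime x - (mu - nu) / (x ^ 2 + 1)).
Proof.
intros Hx. apply is_derive_Reals.
apply (is_derive_ext (fun t => F t + (mu - nu) * (PI / 2 - atan t))); [intros; rewrite fF_eq; reflexivity|].
apply is_derive_Reals.
replace (Fprime x - (mu - nu) / (x ^ 2 + 1)) with (Fprime x + (mu - nu) * (0 - / (1 + x^2)))
  by (field; nra).
apply derivable_pt_lim_plus; [apply F_deriv, Hx|].
apply derivable_pt_lim_scal, derivable_pt_lim_minus; [apply derivable_pt_lim_const | apply derivable_pt_lim_atan].
Qed.

Lemma f_deriv_bound x : x <> 0 ->
  Rabs (Fprime x - (mu - nu) / (x ^ 2 + 1))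
  <= part1_const mu nu * exp (4 * M) / Den mu nu x + (mu - nu) / (x ^ 2 + 1).
Proof.
intros Hx. destruct (Fprime_bound_exp x Hx) as [H1 H2].
destruct (Fprime_const_le_part1 mu nu M Hmu Hnu Hnumu) as [_ HA].
pose proof (Den_pos mu nu x).
assert (Fprime_const mu nu M / Den mu nu x <= part1_const mu nu * exp (4 * M) / Den mu nu x)
  by (apply Rmult_le_compat_r; [apply Rlt_le, Rinv_0_lt_compat|]; lra).
assert (0 < (mu - nu) / (x ^ 2 + 1)) by (apply Rdiv_lt_0_compat; nra).
apply Rabs_le. lra.
Qed.

Definition decay_exp := Rmin (2 * mu - 1) 1.
Definition deriv_const := part1_const mu nu * exp (4 * M) + (mu - nu).
Definition decay_const := 2 * deriv_const + 4 * (mu - nu) * PI.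

Lemma decay_exp_range : 0 < decay_exp <= 1 /\ decay_exp <= 2 * mu - 1.
Proof. unfold decay_exp. split; [split; [apply Rmin_glb_lt | apply Rmin_r] | apply Rmin_l]; lra. Qed.

Lemma part1_scaled_pos : 0 < part1_const mu nu * exp (4 * M).
Proof.
unfold part1_const. pose proof (kappa_const_pos mu nu Hnu Hnumu). pose proof (exp_pos (4 * M)).
assert (0 < 1 / (2 * mu - 1)) by (apply Rdiv_lt_0_compat; lra).
apply Rmult_lt_0_compat; [apply Rmult_lt_0_compat; [apply Rmult_lt_0_compat|] |]; lra.
Qed.

Lemma deriv_const_pos : 0 < deriv_const.
Proof. unfold deriv_const. pose proof part1_scaled_pos. lra. Qed.

(* |f y| <= C (1+|y|)^(-gamma): part (1) far away, the global bound near 0. *)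
Lemma f_decay y : Rabs (fF mu nu F y) <= decay_const * Rpower (1 + Rabs y) (- decay_exp).
Proof.
destruct decay_exp_range as [Hgam Hgam2]. pose proof deriv_const_pos as HK0.
pose proof (Rpower_pos (1 + Rabs y) (- decay_exp)). pose proof PI_RGT_0.
unfold decay_const. destruct (Rle_or_lt 1 (Rabs y)) as [Hy|Hy].
- eapply Rle_trans; [apply f_bound_far, Hy|].
  assert (E1 : Rpower (Rabs y) (1 - 2 * mu) <= Rpower (Rabs y) (- decay_exp)) by (apply Rle_Rpower; lra).
  assert (E2 : / Rabs y <= Rpower (Rabs y) (- decay_exp)).
  { replace (/ Rabs y) with (Rpower (Rabs y) (Ropp 1)) by (rewrite Rpower_Ropp, Rpower_1 by lra; reflexivity).
    apply Rle_Rpower; lra. }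
  assert (E3 : Rpower (Rabs y) (- decay_exp) <= 2 * Rpower (1 + Rabs y) (- decay_exp)).
  { eapply Rle_trans; [apply (Rpower_neg_antitone ((1 + Rabs y) / 2)) | apply Rpower_neg_half]; lra. }
  pose proof (exp_pos (4 * M)).
  assert (part1_const mu nu * exp (4 * M) * Rpower (Rabs y) (1 - 2 * mu)
          + (mu - nu) / Rabs y <= deriv_const * Rpower (Rabs y) (- decay_exp)).
  { unfold deriv_const, Rdiv. rewrite Rmult_plus_distr_r.
    apply Rplus_le_compat; apply Rmult_le_compat_l; try lra.
    pose proof part1_scaled_pos. lra. }
  assert (deriv_const * Rpower (Rabs y) (- decay_exp) <= deriv_const * (2 * Rpower (1 + Rabs y) (- decay_exp)))
    by (apply Rmult_le_compat_l; lra).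
  assert (0 <= 4 * (mu - nu) * PI * Rpower (1 + Rabs y) (- decay_exp))
    by (apply Rmult_le_pos; [apply Rmult_le_pos|]; lra).
  lra.
- eapply Rle_trans; [apply f_bound|].
  assert (Rpower 2 (- decay_exp) <= Rpower (1 + Rabs y) (- decay_exp))
    by (apply Rpower_neg_antitone; [pose proof (Rabs_pos y) |]; lra).
  assert (/ 2 <= Rpower 2 (- decay_exp)).
  { rewrite Rpower_Ropp. apply Rinv_le_contravar; [apply Rpower_pos|].
    apply Rle_trans with (Rpower 2 1); [apply Rle_Rpower | rewrite Rpower_1]; lra. }
  assert (4 * (mu - nu) * PI * / 2 <= 4 * (mu - nu) * PI * Rpower (1 + Rabs y) (- decay_exp))
    by (apply Rmult_le_compat_l; [apply Rmult_le_pos|]; lra).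
  assert (0 <= 2 * deriv_const * Rpower (1 + Rabs y) (- decay_exp))
    by (apply Rmult_le_pos; lra).
  lra.
Qed.

Lemma f_deriv_near x y : 4 <= Rabs x -> Rabs (y - x) <= 1 ->
  exists l, derivable_pt_lim (fF mu nu F) y l /\ Rabs l <= deriv_const / (Rabs x - 1).
Proof.
intros Hx Hy.
assert (Hy3 : Rabs x - 1 <= Rabs y).
{ pose proof (Rabs_triang_inv x (x - y)). replace (x - (x - y)) with y in H by ring.
  rewrite Rabs_minus_sym in Hy. lra. }
assert (Hy0 : y <> 0) by (intro; subst; rewrite Rabs_R0 in Hy3; lra).
exists (Fprime y - (mu - nu) / (y ^ 2 + 1)). split; [apply f_has_deriv, Hy0|].
eapply Rle_trans; [apply f_deriv_bound, Hy0|].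
assert (Hyy : Rabs y <= Den mu nu y).
{ eapply Rle_trans; [|apply Den_ge; lra].
  rewrite <- (Rpower_1 (Rabs y)) at 1 by lra. apply Rle_Rpower; lra. }
assert (Hy2 : Rabs y <= y^2 + 1) by (rewrite <- pow2_abs; nra).
pose proof (Den_pos mu nu y). pose proof (exp_pos (4 * M)). pose proof deriv_const_pos.
pose proof part1_scaled_pos.
apply Rle_trans with (deriv_const / Rabs y).
- unfold deriv_const, Rdiv. rewrite Rmult_plus_distr_r.
  apply Rplus_le_compat; apply Rmult_le_compat_l; try lra; apply Rinv_le_contravar; lra.
- unfold Rdiv. apply Rmult_le_compat_l; [lra | apply Rinv_le_contravar; lra].
Qed.

End UnderSetup.

(** * Principal values through symmetric differences *)

Lemma ex_RInt_of_continuity (h : R -> R) a b :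
  (forall z, Rmin a b <= z <= Rmax a b -> continuity_pt h z) -> ex_RInt h a b.
Proof.
intros H. apply (@ex_RInt_continuous R_CompleteNormedModule).
intros z Hz. apply continuity_pt_filterlim. auto.
Qed.

(* The symmetric difference quotient D(t) = (f(x-t) - f(x+t))/t: the
   principal-value integrand folded onto t > 0. *)
Definition sym_diff (f : R -> R) x t := (f (x - t) - f (x + t)) / t.

Lemma shift_cont f x s t : continuity f -> continuity_pt (fun t => f (x + s * t)) t.
Proof.
intros Hf. apply (continuity_pt_comp (fun t => x + s * t) f); [|apply Hf].
apply continuity_pt_plus; [apply continuity_pt_const; intros ? ?; reflexivity|].
apply continuity_pt_scal, continuity_pt_id.
Qed.

Lemma sym_diff_ex_RInt f x a b : continuity f -> 0 < a -> 0 < b -> ex_RInt (sym_diff f x) a b.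
Proof.
intros Hf Ha Hb. apply ex_RInt_of_continuity. intros z Hz.
assert (0 < Rmin a b) by (apply Rmin_glb_lt; lra).
unfold sym_diff. apply continuity_pt_div; [|apply continuity_pt_id | lra].
apply continuity_pt_minus.
- apply (continuity_pt_ext (fun t => f (x + -1 * t))); [intros; f_equal; ring | apply shift_cont, Hf].
- apply (continuity_pt_ext (fun t => f (x + 1 * t))); [intros; f_equal; ring | apply shift_cont, Hf].
Qed.

Lemma sym_diff_chasles f x a b c : continuity f -> 0 < a -> 0 < b -> 0 < c ->
  RInt (sym_diff f x) a c = RInt (sym_diff f x) a b + RInt (sym_diff f x) b c.
Proof. intros. rewrite <- (RInt_Chasles (sym_diff f x) a b c); try apply sym_diff_ex_RInt; auto. Qed.

Lemma RInt_pv_half f x s e Rr : continuity f -> (s = 1 \/ s = -1) -> 0 < e < Rr ->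
  RInt (fun y => f y / (x - y)) (x + s * e) (x + s * Rr) = RInt (fun t => - (f (x + s * t) / t)) e Rr.
Proof.
intros Hf Hs He.
assert (Hex : ex_RInt (fun y => f y / (x - y)) (s * e + x) (s * Rr + x)).
{ apply ex_RInt_of_continuity. intros z Hz.
  assert (z <> x).
  { destruct Hs as [-> | ->];
      [rewrite Rmin_left, Rmax_right in Hz by lra | rewrite Rmin_right, Rmax_left in Hz by lra]; lra. }
  apply continuity_pt_div; [apply Hf | | lra].
  apply continuity_pt_minus; [apply continuity_pt_const; intros ? ?; reflexivity | apply continuity_pt_id]. }
replace (x + s * e) with (s * e + x) by ring. replace (x + s * Rr) with (s * Rr + x) by ring.
rewrite <- (RInt_comp_lin _ s x e Rr Hex). apply RInt_ext.
intros t Ht. rewrite Rmin_left, Rmax_right in Ht by lra.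
unfold scal; simpl; unfold mult; simpl.
replace (s * t + x) with (x + s * t) by ring.
destruct Hs as [-> | ->]; field; lra.
Qed.

Lemma pv_trunc_sym_diff f x e Rr : continuity f -> 0 < e < Rr ->
  pv_trunc f x e Rr (RInt (sym_diff f x) e Rr).
Proof.
intros Hf He.
assert (Hex : forall s, s = 1 \/ s = -1 -> ex_RInt (fun t => - (f (x + s * t) / t)) e Rr).
{ intros s Hs. apply ex_RInt_of_continuity. intros z Hz. rewrite Rmin_left, Rmax_right in Hz by lra.
  apply continuity_pt_opp, continuity_pt_div; [apply shift_cont, Hf | apply continuity_pt_id | lra]. }
assert (Hpv : forall a b, a <= b -> (b < x \/ x < a) -> ex_RInt (fun y => f y / (x - y)) a b).
{ intros a b Hab Hx. apply ex_RInt_of_continuity. intros z Hz. rewrite Rmin_left, Rmax_right in Hz by lra.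
  apply continuity_pt_div; [apply Hf | | lra].
  apply continuity_pt_minus; [apply continuity_pt_const; intros ? ?; reflexivity | apply continuity_pt_id]. }
assert (E1 : ex_RInt (fun y => f y / (x - y)) (x - Rr) (x - e)) by (apply Hpv; lra).
assert (E2 : ex_RInt (fun y => f y / (x - y)) (x + e) (x + Rr)) by (apply Hpv; lra).
exists (ex_RInt_Reals_0 _ _ _ E1), (ex_RInt_Reals_0 _ _ _ E2).
rewrite <- !RInt_Reals.
assert (I1 : RInt (fun y => f y / (x - y)) (x - Rr) (x - e)
             = - RInt (fun t => - (f (x + -1 * t) / t)) e Rr).
{ rewrite <- RInt_pv_half by (auto; lra).
  replace (x + -1 * e) with (x - e) by ring. replace (x + -1 * Rr) with (x - Rr) by ring.
  rewrite <- (opp_RInt_swap _ (x - Rr) (x - e)) by exact E1. symmetry. apply Ropp_involutive. }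
assert (I2 : RInt (fun y => f y / (x - y)) (x + e) (x + Rr) = RInt (fun t => - (f (x + 1 * t) / t)) e Rr).
{ rewrite <- RInt_pv_half by (auto; lra). f_equal; ring. }
rewrite I1, I2.
rewrite (RInt_ext (sym_diff f x)
  (fun t => minus (- (f (x + 1 * t) / t)) (- (f (x + -1 * t) / t)))).
- rewrite (@RInt_minus R_CompleteNormedModule) by (apply Hex; auto). unfold minus, plus, opp; simpl. ring.
- intros t Ht. rewrite Rmin_left, Rmax_right in Ht by lra.
  unfold minus, plus, opp, sym_diff; simpl.
  replace (x + -1 * t) with (x - t) by ring. replace (x + 1 * t) with (x + t) by ring.
  field. lra.
Qed.

(* Near t = 0: by the mean value theorem |D(t)| <= 2 sup |f'| on [x-1, x+1]. *)
Lemma sym_diff_near_bound f x K :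
  (forall y, Rabs (y - x) <= 1 -> exists l, derivable_pt_lim f y l /\ Rabs l <= K) ->
  forall t, 0 < t <= 1 -> Rabs (sym_diff f x t) <= 2 * K.
Proof.
intros Hd t Ht.
assert (HD : forall y, Rabs (y - x) <= 1 -> is_derive f y (Derive f y) /\ Rabs (Derive f y) <= K).
{ intros y Hy. destruct (Hd y Hy) as [l [H1 H2]]. apply is_derive_Reals in H1.
  rewrite (is_derive_unique f y l H1). auto. }
destruct (MVT_gen f (x - t) (x + t) (Derive f)) as [c [Hc1 Hc2]].
- intros z Hz. rewrite Rmin_left, Rmax_right in Hz by lra. apply HD, Rabs_le. lra.
- intros z Hz. rewrite Rmin_left, Rmax_right in Hz by lra. destruct (HD z ltac:(apply Rabs_le; lra)) as [H1 _].
  apply is_derive_Reals in H1. apply (continuity_pt_of_deriv _ _ _ H1).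
- rewrite Rmin_left, Rmax_right in Hc1 by lra. destruct (HD c ltac:(apply Rabs_le; lra)) as [_ H2].
  unfold sym_diff. replace ((f (x - t) - f (x + t)) / t) with (- (2 * Derive f c)) by (field_simplify_eq; lra).
  rewrite Rabs_Ropp, Rabs_mult, (Rabs_pos_eq 2) by lra. lra.
Qed.

Definition tail_majorant X g t := (Rpower (1 + Rabs (X - t)) (-g) + Rpower (1 + X + t) (-g)) / t.

Lemma sym_diff_tail_bound f x g C : 0 <= C ->
  (forall y, Rabs (f y) <= C * Rpower (1 + Rabs y) (-g)) ->
  forall t, 0 < t -> Rabs (sym_diff f x t) <= C * tail_majorant (Rabs x) g t.
Proof.
intros HC Hf t Ht. unfold sym_diff, tail_majorant.
assert (E : Rabs (f (x - t) - f (x + t))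
            <= C * (Rpower (1 + Rabs (Rabs x - t)) (-g) + Rpower (1 + Rabs x + t) (-g))).
{ eapply Rle_trans; [apply Rabs_triang|]. rewrite Rabs_Ropp.
  pose proof (Hf (x - t)) as Hm. pose proof (Hf (x + t)) as Hp.
  destruct (Rle_or_lt 0 x).
  - rewrite (Rabs_pos_eq x) by lra. rewrite (Rabs_pos_eq (x + t)) in Hp by lra.
    replace (1 + x + t) with (1 + (x + t)) by ring. lra.
  - rewrite (Rabs_left x) by lra. rewrite (Rabs_left (x - t)) in Hm by lra.
    replace (1 + - x + t) with (1 + - (x - t)) by ring.
    replace (Rabs (- x - t)) with (Rabs (x + t)) by (rewrite <- Rabs_Ropp; f_equal; ring). lra. }
unfold Rdiv. rewrite Rabs_mult, (Rabs_pos_eq (/ t)) by (apply Rlt_le, Rinv_0_lt_compat; lra).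
rewrite <- Rmult_assoc. apply Rmult_le_compat_r; [apply Rlt_le, Rinv_0_lt_compat; lra | exact E].
Qed.

Lemma RInt_abs_le_primitive (D m Mf : R -> R) a b : a <= b -> ex_RInt D a b ->
  (forall t, a <= t <= b -> Rabs (D t) <= m t) ->
  (forall t, a <= t <= b -> is_derive Mf t (m t)) ->
  (forall t, a <= t <= b -> continuity_pt m t) ->
  Rabs (RInt D a b) <= Mf b - Mf a.
Proof.
intros Hab HD Hm Hd Hc.
apply (norm_RInt_le D m a b (RInt D a b) (Mf b - Mf a) Hab Hm); [apply (@RInt_correct R_CompleteNormedModule), HD|].
apply (@is_RInt_derive R_CompleteNormedModule); rewrite Rmin_left, Rmax_right by lra; auto.
intros t Ht. apply continuity_pt_filterlim. auto.
Qed.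

Lemma sqrt_facts X : 4 <= X -> 2 <= sqrt X /\ sqrt X <= X / 2 /\ sqrt X * sqrt X = X.
Proof.
intros HX. assert (Hs : sqrt X * sqrt X = X) by (apply sqrt_sqrt; lra).
assert (H2 : 2 <= sqrt X).
{ replace 2 with (sqrt 4) by (replace 4 with (2 * 2) by ring; rewrite sqrt_square; lra).
  apply sqrt_le_1_alt. lra. }
nra.
Qed.

Lemma tail_majorant_small X g t : 4 <= X -> 0 <= g <= 1 -> 1 <= t <= X / 2 ->
  tail_majorant X g t <= 4 * Rpower X (-g) / t.
Proof.
intros HX Hg Ht. unfold tail_majorant.
assert (A1 : Rpower (1 + Rabs (X - t)) (-g) <= 2 * Rpower X (-g)).
{ eapply Rle_trans; [apply (Rpower_neg_antitone (X/2)) | apply Rpower_neg_half]; try rewrite Rabs_pos_eq; lra. }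
assert (A2 : Rpower (1 + X + t) (-g) <= 2 * Rpower X (-g)).
{ eapply Rle_trans; [apply (Rpower_neg_antitone (X/2)) | apply Rpower_neg_half]; lra. }
unfold Rdiv. apply Rmult_le_compat_r; [apply Rlt_le, Rinv_0_lt_compat|]; lra.
Qed.

Lemma tail_majorant_side X g t : 4 <= X -> 0 <= g <= 1 -> X / 2 <= t -> sqrt X <= Rabs (X - t) ->
  tail_majorant X g t <= 4 * Rpower X (-(g/2)) / X.
Proof.
intros HX Hg Ht Hs. destruct (sqrt_facts X HX) as (S1&S2&S3). unfold tail_majorant.
assert (A1 : Rpower (1 + Rabs (X - t)) (-g) <= Rpower X (-(g/2)))
  by (rewrite <- Rpower_sqrt_neg by lra; apply Rpower_neg_antitone; lra).
assert (A2 : Rpower (1 + X + t) (-g) <= Rpower X (-(g/2)))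
  by (rewrite <- Rpower_sqrt_neg by lra; apply Rpower_neg_antitone; lra).
pose proof (Rpower_pos X (-(g/2))).
apply Rle_trans with (2 * Rpower X (-(g/2)) / t).
- unfold Rdiv. apply Rmult_le_compat_r; [apply Rlt_le, Rinv_0_lt_compat|]; lra.
- replace (4 * Rpower X (- (g / 2)) / X) with (2 * Rpower X (- (g / 2)) / (X / 2)) by (field; lra).
  unfold Rdiv. apply Rmult_le_compat_l; [lra | apply Rinv_le_contravar; lra].
Qed.

Lemma tail_majorant_center X g t : 4 <= X -> 0 <= g <= 1 -> X / 2 <= t -> tail_majorant X g t <= 4 / X.
Proof.
intros HX Hg Ht. unfold tail_majorant.
assert (Rpower (1 + Rabs (X - t)) (-g) <= 1)
  by (apply Rpower_neg_le_1; [pose proof (Rabs_pos (X-t)) |]; lra).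
assert (Rpower (1 + X + t) (-g) <= 1) by (apply Rpower_neg_le_1; lra).
apply Rle_trans with (2 / t).
- unfold Rdiv. apply Rmult_le_compat_r; [apply Rlt_le, Rinv_0_lt_compat|]; lra.
- replace (4 / X) with (2 / (X / 2)) by (field; lra).
  unfold Rdiv. apply Rmult_le_compat_l; [lra | apply Rinv_le_contravar; lra].
Qed.

Lemma tail_majorant_far X g t : 4 <= X -> 0 <= g <= 1 -> 2 * X <= t ->
  tail_majorant X g t <= 4 * Rpower t (-g) / t.
Proof.
intros HX Hg Ht. unfold tail_majorant.
assert (A1 : Rpower (1 + Rabs (X - t)) (-g) <= 2 * Rpower t (-g)).
{ eapply Rle_trans; [apply (Rpower_neg_antitone (t/2)) | apply Rpower_neg_half];
    try rewrite Rabs_minus_sym, Rabs_pos_eq; lra. }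
assert (A2 : Rpower (1 + X + t) (-g) <= 2 * Rpower t (-g)).
{ eapply Rle_trans; [apply (Rpower_neg_antitone (t/2)) | apply Rpower_neg_half]; lra. }
unfold Rdiv. apply Rmult_le_compat_r; [apply Rlt_le, Rinv_0_lt_compat|]; lra.
Qed.

Lemma inner_limit f x K : continuity f -> 0 <= K ->
  (forall y, Rabs (y - x) <= 1 -> exists l, derivable_pt_lim f y l /\ Rabs l <= K) ->
  exists L1, forall s, 1 <= s -> Rabs (RInt (sym_diff f x) (/ s) 1 - L1) <= 2 * K / s.
Proof.
intros Hf HK Hd.
apply (limit_of_cauchy_modulus (fun s => RInt (sym_diff f x) (/ s) 1) (fun s => 2 * K / s) 1).
- intros a b Ha Hab.
  assert (0 < / b <= / a) by (split; [apply Rinv_0_lt_compat | apply Rinv_le_contravar]; lra).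
  assert (/ a <= 1) by (rewrite <- Rinv_1; apply Rinv_le_contravar; lra).
  rewrite (sym_diff_chasles f x (/ b) (/ a) 1) by (auto; lra).
  replace (RInt (sym_diff f x) (/ a) 1 - (RInt (sym_diff f x) (/ b) (/ a) + RInt (sym_diff f x) (/ a) 1))
    with (- RInt (sym_diff f x) (/ b) (/ a)) by ring.
  rewrite Rabs_Ropp. eapply Rle_trans.
  + apply abs_RInt_le_const; [lra | apply sym_diff_ex_RInt; auto; lra |].
    intros t Ht. apply (sym_diff_near_bound f x K Hd). lra.
  + replace (2 * K / a) with (/ a * (2 * K)) by (unfold Rdiv; ring). apply Rmult_le_compat_r; lra.
- intros eps He. exists (2 * K / eps + 1). intros a Ha.
  assert (0 <= 2 * K / eps) by (apply Rmult_le_pos; [lra | apply Rlt_le, Rinv_0_lt_compat; lra]).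
  apply Rmult_lt_reg_r with a; [lra|]. replace (2 * K / a * a) with (2 * K) by (field; lra).
  rewrite (Rmult_comm eps a). replace (2 * K) with (2 * K / eps * eps) by (field; lra).
  apply Rmult_lt_compat_r; lra.
Qed.

Lemma Rabs_sum5 a b c d e :
  Rabs (a + (b + (c + (d + e)))) <= Rabs a + Rabs b + Rabs c + Rabs d + Rabs e.
Proof.
pose proof (Rabs_triang a (b + (c + (d + e)))). pose proof (Rabs_triang b (c + (d + e))).
pose proof (Rabs_triang c (d + e)). pose proof (Rabs_triang d e). lra.
Qed.

Section TailIntegral.
Variables (f : R -> R) (x g C : R).
Hypotheses (Hf : continuity f) (HX4 : 4 <= Rabs x) (Hg : 0 < g <= 1) (HC : 0 <= C)
  (Hb : forall y, Rabs (f y) <= C * Rpower (1 + Rabs y) (-g)).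
Local Notation X := (Rabs x).
Local Notation S := (Rpower (Rabs x) (-(g/2))).

(* t >= 2X: |D| <= 4C t^(-g-1), integrable at +oo. *)
Lemma far_range_int a b : 2 * X <= a <= b ->
  Rabs (RInt (sym_diff f x) a b) <= 4 * C / g * Rpower a (-g).
Proof.
intros Hab.
assert (HZ : 0 <= 4 * C / g) by (apply Rmult_le_pos; [lra | apply Rlt_le, Rinv_0_lt_compat; lra]).
eapply Rle_trans.
- apply (RInt_abs_le_primitive (sym_diff f x) (fun t => C * (4 * Rpower t (-g) / t))
    (fun t => - (4 * C / g) * Rpower t (-g))); [lra | apply sym_diff_ex_RInt; auto; lra | | |].
  + intros t Ht. eapply Rle_trans; [apply sym_diff_tail_bound; auto; lra|].
    apply Rmult_le_compat_l; [auto | apply tail_majorant_far; lra].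
  + intros t Ht. unfold Rpower. auto_derive; [lra | field; lra].
  + intros t Ht. apply continuity_pt_scal. unfold Rdiv. apply continuity_pt_mult.
    * apply continuity_pt_scal, (continuity_pt_of_deriv _ _ _ (derivable_pt_lim_power t (-g) ltac:(lra))).
    * apply continuity_pt_inv; [apply continuity_pt_id | lra].
- pose proof (Rpower_pos b (-g)). nra.
Qed.

(* 1 <= t <= X/2: |D| <= 4C X^(-g)/t, giving a log X loss absorbed by X^(g/2). *)
Lemma first_range_int : Rabs (RInt (sym_diff f x) 1 (X/2)) <= 8 * C / g * S.
Proof.
eapply Rle_trans.
- apply (RInt_abs_le_primitive (sym_diff f x) (fun t => C * (4 * Rpower X (-g) / t))
    (fun t => C * 4 * Rpower X (-g) * ln t)); [lra | apply sym_diff_ex_RInt; auto; lra | | |].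
  + intros t Ht. eapply Rle_trans; [apply sym_diff_tail_bound; auto; lra|].
    apply Rmult_le_compat_l; [auto | apply tail_majorant_small; lra].
  + intros t Ht. auto_derive; [lra | field; lra].
  + intros t Ht. apply continuity_pt_scal. unfold Rdiv. apply continuity_pt_mult.
    * apply continuity_pt_const; intros ? ?; reflexivity.
    * apply continuity_pt_inv; [apply continuity_pt_id | lra].
- rewrite ln_1, Rmult_0_r, Rminus_0_r.
  assert (ln (X/2) <= ln X) by (apply ln_le; lra).
  pose proof (ln_le_Rpower X g ltac:(lra) ltac:(lra)).
  assert (0 <= ln (X/2)) by (rewrite <- ln_1; apply ln_le; lra).
  pose proof (Rpower_pos X (-g)).
  replace S with (Rpower X (-g) * Rpower X (g/2)) by (rewrite <- Rpower_plus; f_equal; field).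
  apply Rle_trans with (C * 4 * Rpower X (- g) * (2 / g * Rpower X (g / 2))).
  + apply Rmult_le_compat_l; [apply Rmult_le_pos|]; lra.
  + right. field. lra.
Qed.

Lemma side_range_int a b : X / 2 <= a <= b -> b - a <= 3 * X / 2 ->
  (forall t, a <= t <= b -> sqrt X <= Rabs (X - t)) ->
  Rabs (RInt (sym_diff f x) a b) <= 6 * C * S.
Proof.
intros Hab Hlen Hfar. pose proof (Rpower_pos (Rabs x) (-(g/2))).
eapply Rle_trans.
- apply abs_RInt_le_const; [lra | apply sym_diff_ex_RInt; auto; lra |].
  intros t Ht. eapply Rle_trans; [apply sym_diff_tail_bound; auto; lra|].
  apply Rmult_le_compat_l; [auto | apply (tail_majorant_side X g t); auto; lra].
- assert (0 <= C * (4 * S / X)) by (apply Rmult_le_pos; [lra | apply Rlt_le, Rdiv_lt_0_compat; lra]).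
  apply Rle_trans with (3 * X / 2 * (C * (4 * S / X))); [apply Rmult_le_compat_r; lra|].
  right. field. lra.
Qed.

(* |X - t| <= sqrt X: |D| <= 4C/X on an interval of length 2 sqrt X. *)
Lemma center_range_int : Rabs (RInt (sym_diff f x) (X - sqrt X) (X + sqrt X)) <= 8 * C * S.
Proof.
destruct (sqrt_facts X HX4) as (S1&S2&S3).
eapply Rle_trans.
- apply abs_RInt_le_const; [lra | apply sym_diff_ex_RInt; auto; lra |].
  intros t Ht. eapply Rle_trans; [apply sym_diff_tail_bound; auto; lra|].
  apply Rmult_le_compat_l; [auto | apply (tail_majorant_center X g t); lra].
- replace ((X + sqrt X - (X - sqrt X)) * (C * (4 / X))) with (8 * C * / sqrt X)
    by (replace (4 / X) with (4 / (sqrt X * sqrt X)) by (rewrite S3; reflexivity); field; lra).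
  apply Rmult_le_compat_l; [lra|].
  replace (/ sqrt X) with (Rpower X (-(1/2)))
    by (rewrite <- (Rpower_sqrt_neg X 1), Rpower_Ropp, Rpower_1; lra).
  apply Rle_Rpower; lra.
Qed.

Lemma tail_int_bound Rr : 2 * X <= Rr ->
  Rabs (RInt (sym_diff f x) 1 Rr) <= C * (12 / g + 20) * S.
Proof.
intros HR. destruct (sqrt_facts X HX4) as (S1&S2&S3). pose proof (Rpower_pos (Rabs x) (-(g/2))).
rewrite (sym_diff_chasles f x 1 (X/2) Rr), (sym_diff_chasles f x (X/2) (X - sqrt X) Rr),
  (sym_diff_chasles f x (X - sqrt X) (X + sqrt X) Rr), (sym_diff_chasles f x (X + sqrt X) (2 * X) Rr);
  auto; try lra.
pose proof first_range_int as J1. pose proof center_range_int as J3.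
assert (J2 : Rabs (RInt (sym_diff f x) (X/2) (X - sqrt X)) <= 6 * C * S).
{ apply side_range_int; try lra. intros t Ht. rewrite (Rabs_pos_eq (X - t)); lra. }
assert (J4 : Rabs (RInt (sym_diff f x) (X + sqrt X) (2 * X)) <= 6 * C * S).
{ apply side_range_int; try lra. intros t Ht. rewrite Rabs_minus_sym, (Rabs_pos_eq (t - X)); lra. }
assert (J5 : Rabs (RInt (sym_diff f x) (2 * X) Rr) <= 4 * C / g * S).
{ eapply Rle_trans; [apply far_range_int; lra|].
  apply Rmult_le_compat_l; [apply Rmult_le_pos; [lra | apply Rlt_le, Rinv_0_lt_compat; lra]|].
  apply Rle_trans with (Rpower X (-g)); [apply Rpower_neg_antitone | apply Rle_Rpower]; lra. }
replace (C * (12 / g + 20) * S) with (8 * C / g * S + 6 * C * S + 8 * C * S + 6 * C * S + 4 * C / g * S)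
  by (field; lra).
eapply Rle_trans; [apply Rabs_sum5 | lra].
Qed.

Lemma outer_limit : exists L2, forall a, 2 * X <= a ->
  Rabs (RInt (sym_diff f x) 1 a - L2) <= 4 * C / g * Rpower a (-g).
Proof.
apply (limit_of_cauchy_modulus (fun a => RInt (sym_diff f x) 1 a) (fun a => 4 * C / g * Rpower a (-g))).
- intros a b Ha Hab. rewrite (sym_diff_chasles f x 1 a b) by (auto; lra).
  replace (RInt (sym_diff f x) 1 a - (RInt (sym_diff f x) 1 a + RInt (sym_diff f x) a b))
    with (- RInt (sym_diff f x) a b) by ring.
  rewrite Rabs_Ropp. apply far_range_int. lra.
- apply Rpower_neg_vanishes; [apply Rmult_le_pos; [lra | apply Rlt_le, Rinv_0_lt_compat] | ]; lra.
Qed.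

End TailIntegral.

Lemma hilbert_at_of_limits f x K A (tau : R -> R) L1 L2 : continuity f -> 0 <= K -> 1 <= A ->
  (forall s, 1 <= s -> Rabs (RInt (sym_diff f x) (/ s) 1 - L1) <= 2 * K / s) ->
  (forall a, A <= a -> Rabs (RInt (sym_diff f x) 1 a - L2) <= tau a) ->
  (forall eps, 0 < eps -> exists B, forall a, B <= a -> tau a < eps) ->
  hilbert_at f x ((L1 + L2) / PI).
Proof.
intros Hf HK HA Hin Hout Htau eps He. pose proof PI_RGT_0.
destruct (Htau (eps * PI / 2) ltac:(nra)) as [B0 HB0].
exists (Rmin 1 (eps * PI / (4 * K + 4))), (Rmax A B0). split; [apply Rmin_glb_lt; [lra | apply Rdiv_lt_0_compat; nra]|].
intros e Rr He1 HR.
assert (He2 : e < 1) by (pose proof (Rmin_l 1 (eps * PI / (4 * K + 4))); lra).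
assert (He3 : e < eps * PI / (4 * K + 4)) by (pose proof (Rmin_r 1 (eps * PI / (4 * K + 4))); lra).
pose proof (Rmax_l A B0). pose proof (Rmax_r A B0).
exists (RInt (sym_diff f x) e Rr). split; [apply pv_trunc_sym_diff; auto; lra|].
specialize (Hin (/ e) ltac:(rewrite <- Rinv_1; apply Rinv_le_contravar; lra)).
rewrite Rinv_inv in Hin. specialize (Hout Rr ltac:(lra)). specialize (HB0 Rr ltac:(lra)).
assert (Hk : 2 * K / / e < eps * PI / 2).
{ unfold Rdiv at 1. rewrite Rinv_inv.
  apply Rle_lt_trans with (2 * K * (eps * PI / (4 * K + 4))); [apply Rmult_le_compat_l; lra|].
  replace (2 * K * (eps * PI / (4 * K + 4))) with (eps * PI / 2 * (2 * K / (2 * K + 2))) by (field; lra).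
  assert (2 * K / (2 * K + 2) < 1)
    by (apply Rmult_lt_reg_r with (2 * K + 2); [lra|]; unfold Rdiv; rewrite Rmult_assoc, Rinv_l; lra).
  assert (0 < eps * PI / 2) by nra. nra. }
rewrite (sym_diff_chasles f x e 1 Rr) by (auto; lra).
replace ((RInt (sym_diff f x) e 1 + RInt (sym_diff f x) 1 Rr) / PI - (L1 + L2) / PI) with
  (((RInt (sym_diff f x) e 1 - L1) + (RInt (sym_diff f x) 1 Rr - L2)) / PI) by (field; lra).
unfold Rdiv. rewrite Rabs_mult, (Rabs_pos_eq (/ PI)) by (apply Rlt_le, Rinv_0_lt_compat; lra).
apply Rmult_lt_reg_r with PI; [lra|]. rewrite Rmult_assoc, Rinv_l, Rmult_1_r by lra.
eapply Rle_lt_trans; [apply Rabs_triang | lra].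
Qed.

Lemma hilbert_transform_bound f x g C K :
  continuity f -> 4 <= Rabs x -> 0 < g <= 1 -> 0 <= C -> 0 <= K ->
  (forall y, Rabs (f y) <= C * Rpower (1 + Rabs y) (-g)) ->
  (forall y, Rabs (y - x) <= 1 -> exists l, derivable_pt_lim f y l /\ Rabs l <= K) ->
  exists L, hilbert_at f x L /\
    Rabs L <= (2 * K + C * (16 / g + 20) * Rpower (Rabs x) (-(g/2))) / PI.
Proof.
intros Hf HX4 Hg HC HK Hb Hd. pose proof PI_RGT_0.
assert (HZ : 0 <= 4 * C / g) by (apply Rmult_le_pos; [lra | apply Rlt_le, Rinv_0_lt_compat; lra]).
destruct (inner_limit f x K Hf HK Hd) as [L1 HL1].
destruct (outer_limit f x g C Hf HX4 Hg HC Hb) as [L2 HL2].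
pose proof (tail_int_bound f x g C Hf HX4 Hg HC Hb) as HT.
set (X := Rabs x) in *. set (S := Rpower X (-(g/2))) in *.
assert (HL1b : Rabs L1 <= 2 * K).
{ specialize (HL1 1 ltac:(lra)). rewrite Rinv_1, RInt_point in HL1.
  unfold zero in HL1; simpl in HL1. rewrite Rminus_0_l, Rabs_Ropp in HL1. lra. }
assert (HL2b : Rabs L2 <= C * (16 / g + 20) * S).
{ specialize (HL2 (2 * X) ltac:(lra)).
  specialize (HT (2 * X) ltac:(lra)).
  assert (4 * C / g * Rpower (2 * X) (-g) <= 4 * C / g * S).
  { apply Rmult_le_compat_l; [auto|].
    apply Rle_trans with (Rpower X (-g)); [apply Rpower_neg_antitone | apply Rle_Rpower]; lra. }
  replace L2 with (RInt (sym_diff f x) 1 (2 * X) - (RInt (sym_diff f x) 1 (2 * X) - L2)) by ring.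
  eapply Rle_trans; [apply Rabs_triang|]. rewrite Rabs_Ropp.
  replace (C * (16 / g + 20) * S) with (C * (12 / g + 20) * S + 4 * C / g * S) by (field; lra). lra. }
exists ((L1 + L2) / PI). split.
- apply (hilbert_at_of_limits f x K (2 * X) (fun a => 4 * C / g * Rpower a (-g))); auto; [lra|].
  apply Rpower_neg_vanishes; lra.
- unfold Rdiv. rewrite Rabs_mult, (Rabs_pos_eq (/ PI)) by (apply Rlt_le, Rinv_0_lt_compat; lra).
  apply Rmult_le_compat_r; [apply Rlt_le, Rinv_0_lt_compat; lra|].
  eapply Rle_trans; [apply Rabs_triang | lra].
Qed.

(** * Part (2): the bound on T[g] = H f *)

Lemma decay_power_le mu X : 0 < X ->
  Rpower X (-(decay_exp mu / 2)) <= Rpower X (1 / 2 - mu) + Rpower X (-(1/2)).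
Proof.
intros HX. pose proof (Rpower_pos X (1/2 - mu)). pose proof (Rpower_pos X (-(1/2))).
unfold decay_exp. destruct (Rle_or_lt (2 * mu - 1) 1).
- rewrite Rmin_left by lra. replace (- ((2 * mu - 1) / 2)) with (1/2 - mu) by field. lra.
- rewrite Rmin_right by lra. lra.
Qed.

(* The derivative bound K = C/(X-1) of the inner part is O(X^(-gamma/2)). *)
Lemma inv_shift_le X g : 4 <= X -> 0 < g <= 1 -> 2 / (X - 1) <= 3 * Rpower X (-(g/2)).
Proof.
intros HX Hg. apply Rle_trans with (3 / X).
- apply Rmult_le_reg_r with (X * (X - 1)); [nra|].
  replace (2 / (X - 1) * (X * (X - 1))) with (2 * X) by (field; lra).
  replace (3 / X * (X * (X - 1))) with (3 * (X - 1)) by (field; lra). lra.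
- unfold Rdiv. apply Rmult_le_compat_l; [lra|].
  replace (/ X) with (Rpower X (Ropp 1)) by (rewrite Rpower_Ropp, Rpower_1 by lra; reflexivity).
  apply Rle_Rpower; lra.
Qed.

Definition part2_const mu nu M :=
  (3 * deriv_const mu nu M + decay_const mu nu M * (16 / decay_exp mu + 20)) / PI.

(* Part (2): the decay of f and its derivative bound near x feed the general
   Hilbert transform estimate, with g = gamma and K = C / (|x| - 1). *)
Lemma hilbert_f_bound mu nu M g hinv kappa F x : 1 / 2 < mu -> 0 < nu < 1 / 2 ->
  setup mu nu g hinv kappa F -> (forall y, Rabs (g y) <= M) -> 4 <= Rabs x ->
  exists Tx, hilbert_at (fF mu nu F) x Tx /\
    Rabs Tx <= part2_const mu nu M * (Rpower (Rabs x) (1 / 2 - mu) + Rpower (Rabs x) (- (1 / 2))).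
Proof.
intros Hmu Hnu Hs Hg Hx. assert (Hnumu : nu < mu) by lra. pose proof PI_RGT_0.
destruct (decay_exp_range mu Hmu) as [Hgam _].
pose proof (deriv_const_pos mu nu M ltac:(lra) Hnumu Hmu) as HK0.
set (K0 := deriv_const mu nu M) in *. set (C := decay_const mu nu M). set (gam := decay_exp mu) in *.
assert (HC : 0 <= C) by (unfold C, decay_const; fold K0; nra).
destruct (hilbert_transform_bound (fF mu nu F) x gam C (K0 / (Rabs x - 1))) as [L [HL1 HL2]];
  [| lra | lra | lra | apply Rlt_le, Rdiv_lt_0_compat; lra | | |].
- exact (f_cont mu nu g hinv F kappa Hs).
- apply (f_decay mu nu M g hinv F kappa); auto; lra.
- intros y Hy. apply (f_deriv_near mu nu M g hinv F kappa); auto; lra.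
- exists L. split; [exact HL1|].
  set (S := Rpower (Rabs x) (-(gam/2))) in *.
  assert (HS : S <= Rpower (Rabs x) (1 / 2 - mu) + Rpower (Rabs x) (-(1/2))) by (apply decay_power_le; lra).
  assert (H2K : 2 * (K0 / (Rabs x - 1)) <= 3 * K0 * S).
  { replace (2 * (K0 / (Rabs x - 1))) with (K0 * (2 / (Rabs x - 1))) by (field; lra).
    replace (3 * K0 * S) with (K0 * (3 * S)) by ring.
    apply Rmult_le_compat_l; [lra | apply inv_shift_le; lra]. }
  assert (HB0 : 0 <= C * (16 / gam + 20))
    by (apply Rmult_le_pos; [auto | assert (0 < 16 / gam) by (apply Rdiv_lt_0_compat; lra); lra]).
  pose proof (Rpower_pos (Rabs x) (-(gam/2))).
  eapply Rle_trans; [apply HL2|]. unfold part2_const. fold K0 C gam.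
  assert (HPI : 0 <= / PI) by (apply Rlt_le, Rinv_0_lt_compat; lra).
  apply Rle_trans with ((3 * K0 + C * (16 / gam + 20)) * S / PI).
  + unfold Rdiv. apply Rmult_le_compat_r; [exact HPI | nra].
  + replace ((3 * K0 + C * (16 / gam + 20)) / PI * (Rpower (Rabs x) (1 / 2 - mu) + Rpower (Rabs x) (- (1 / 2))))
      with ((3 * K0 + C * (16 / gam + 20)) * (Rpower (Rabs x) (1 / 2 - mu) + Rpower (Rabs x) (- (1 / 2))) / PI)
      by (field; lra).
    unfold Rdiv. apply Rmult_le_compat_r; [exact HPI|]. apply Rmult_le_compat_l; [lra | exact HS].
Qed.

Theorem lemma5p4 :
  forall mu nu : R, 1 / 2 < mu -> 0 < nu < 1 / 2 ->
  (* (1): c = c(mu,nu); Mg is any bound for ||g||_inf (e.g. ||g||_inf itself) *)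
  (exists c : R,
     forall (g hinv : R -> R) (kappa : R) (F : R -> R) (Mg : R),
       setup mu nu g hinv kappa F ->
       (forall y, Rabs (g y) <= Mg) ->
       (forall x, 1 <= Rabs x ->
          Rabs (fF mu nu F x) <=
            c * exp (4 * Mg) * Rpower (Rabs x) (1 - 2 * mu)
            + (mu - nu) / Rabs x) /\
       (forall x, Rabs (fF mu nu F x) <= 2 * (mu - nu) * PI) /\
       (forall x, x <> 0 ->
          exists l, derivable_pt_lim (fF mu nu F) x l /\
            Rabs l <=
              c * exp (4 * Mg) /
                (Rpower (Rabs x) (2 * nu) * Rpower (x ^ 2 + 1) (mu - nu))
              + (mu - nu) / (x ^ 2 + 1))) /\
  (* (2): c = c(mu,nu,M) *)
  (forall M : R, exists c : R,
     forall (g hinv : R -> R) (kappa : R) (F : R -> R),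
       setup mu nu g hinv kappa F ->
       (forall y, Rabs (g y) <= M) ->
       forall x, 4 <= Rabs x ->
         exists Tx, hilbert_at (fF mu nu F) x Tx /\
           Rabs Tx <= c * (Rpower (Rabs x) (1 / 2 - mu) + Rpower (Rabs x) (- (1 / 2)))).
Proof.
intros mu nu Hmu Hnu. assert (Hnumu : nu < mu) by lra. split.
- exists (part1_const mu nu). intros g hinv kappa F Mg Hs Hg.
  split; [|split].
  + apply (f_bound_far mu nu Mg g hinv F kappa); auto; lra.
  + apply (f_bound mu nu Mg g hinv F kappa); auto; lra.
  + intros x Hx. exists (Fprime mu nu g hinv kappa x - (mu - nu) / (x ^ 2 + 1)). split.
    * apply (f_has_deriv mu nu g hinv F kappa Hs x Hx).
    * apply (f_deriv_bound mu nu Mg g hinv F kappa); auto; lra.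
- intros M. exists (part2_const mu nu M). intros g hinv kappa F Hs Hg x Hx.
  apply (hilbert_f_bound mu nu M g hinv kappa F x); auto.
Qed.
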